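(* For $h_0$ fixed, there exist positive numbers $T_X$, $\varepsilon_0$ and $C$ such that for every $t\in[0,T_X]$, $\varepsilon\in(0,\varepsilon_0]$ and $i\in\{1,\dots,N\}$, the points $X_i^\varepsilon(t)$ and $\tilde X^\varepsilon_i(t)$ are defined and $$X_i^\varepsilon(t),\ \tilde X_i^\varepsilon(t)\in\mathcal A^{X^\varepsilon_{i,0,r}}_\varepsilon(d_0,h_0)\quad\text{and}\quad|X_i^\varepsilon(t)-\tilde X_i^\varepsilon(t)|\le\frac{C}{|\ln\varepsilon|}.$$
   Context: $\mathbb{R}^2_+=\{x=(x_z,x_r):x_r>0\}$, $e_z=(1,0)$, $(a_z,a_r)^\perp=(-a_r,a_z)$. Data: $N\ge2$, $X^*=(z^*,r^* )\in\mathbb{R}^2_+$, $Y_{1,0},\dots,Y_{N,0}\in\mathbb{R}^2$ with pairwise distinct radial components $Y_{i,0,r}$, $\gamma>0$, $h_0>0$; $d_0=\frac14\min_{j\ne k}|Y_{j,0,r}-Y_{k,0,r}|$; for $\varepsilon\in(0,1)$, $X^\varepsilon_{i,0}=X^*+Y_{i,0}/\sqrt{|\ln\varepsilon|}$ and $\mathcal A^{r_0}_\varepsilon(d,h)=\{(z,r):|r-r_0|\le d/\sqrt{|\ln\varepsilon|},\ |z-z^*|\le h\}$. $(X^\varepsilon_i)_i$ solves $\frac{d}{dt}X_i^\varepsilon=\frac{\gamma}{4\pi X^\varepsilon_{i,r}}e_z+\frac{\gamma}{2\pi|\ln\varepsilon|}\sum_{j\neq i}\frac{(X_i^\varepsilon-X_j^\varepsilon)^\perp}{|X_i^\varepsilon-X_j^\varepsilon|^2}$,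 $X_i^\varepsilon(0)=X^\varepsilon_{i,0}$. $(\tilde Y_i)_i$ solves $\frac{d}{dt}\tilde Y_i=\frac{\gamma}{2\pi}\sum_{j\ne i}\frac{(\tilde Y_i-\tilde Y_j)^\perp}{|\tilde Y_i-\tilde Y_j|^2}-\frac{\gamma}{4\pi(r^* )^2}\tilde Y_{i,r}e_z$, $\tilde Y_i(0)=Y_{i,0}$, and $\tilde X_i^\varepsilon(t)=X^*+\frac{\gamma}{4\pi r^*}te_z+\frac{1}{\sqrt{|\ln\varepsilon|}}\tilde Y_i(t)$. *)

From Stdlib Require Import Reals Lra List.
From Coquelicot Require Import Coquelicot.
Open Scope R_scope.

(* Points of R^2 are pairs (z, r). Vortex indices are 0 .. N-1
   (paper's 1 .. N shifted by one). *)

Fixpoint sumR (n : nat) (f : nat -> R) : R :=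
  match n with O => 0 | S m => sumR m f + f m end.

Definition sum_ne (N i : nat) (f : nat -> R) : R :=
  sumR N (fun j => if Nat.eqb j i then 0 else f j).

Definition sqnorm (a : R * R) : R := fst a ^ 2 + snd a ^ 2.
Definition dist2 (a b : R * R) : R := sqrt ((fst a - fst b) ^ 2 + (snd a - snd b) ^ 2).

(* minimum of a non-empty list (0 for the empty list, never used) *)
Definition listmin (l : list R) : R :=
  match l with nil => 0 | x :: t => fold_right Rmin x t end.

Definition d0 (N : nat) (Y0 : nat -> R * R) : R :=
  / 4 * listmin
    (flat_map (fun j =>
       flat_map (fun k => if Nat.eqb j k then nil
                          else Rabs (snd (Y0 j) - snd (Y0 k)) :: nil)
                (seq 0 N)) (seq 0 N)).

Definition lnabs (eps : R) : R := Rabs (ln eps).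

(* membership in A_eps^{r0}(d,h) with reference axial coordinate z* *)
Definition inA (zs eps r0 d h : R) (x : R * R) : Prop :=
  Rabs (snd x - r0) <= d / sqrt (lnabs eps) /\ Rabs (fst x - zs) <= h.

Definition F_X (N : nat) (gamma eps : R) (X : nat -> R * R) (i : nat) : R * R :=
  ( gamma / (4 * PI * snd (X i))
    + gamma / (2 * PI * lnabs eps) *
      sum_ne N i (fun j => - (snd (X i) - snd (X j)) /
                            sqnorm (fst (X i) - fst (X j), snd (X i) - snd (X j))),
    gamma / (2 * PI * lnabs eps) *
      sum_ne N i (fun j => (fst (X i) - fst (X j)) /
                            sqnorm (fst (X i) - fst (X j), snd (X i) - snd (X j))) ).

Definition F_Y (N : nat) (gamma rs : R) (Y : nat -> R * R) (i : nat) : R * R :=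
  ( gamma / (2 * PI) *
      sum_ne N i (fun j => - (snd (Y i) - snd (Y j)) /
                            sqnorm (fst (Y i) - fst (Y j), snd (Y i) - snd (Y j)))
    - gamma / (4 * PI * rs ^ 2) * snd (Y i),
    gamma / (2 * PI) *
      sum_ne N i (fun j => (fst (Y i) - fst (Y j)) /
                            sqnorm (fst (Y i) - fst (Y j), snd (Y i) - snd (Y j))) ).

(* admissible configurations (vector field well defined) *)
Definition no_collision (N : nat) (X : nat -> R * R) : Prop :=
  forall i j, (i < N)%nat -> (j < N)%nat -> i <> j -> X i <> X j.

Definition ok_X (N : nat) (X : nat -> R * R) : Prop :=
  no_collision N X /\ forall i, (i < N)%nat -> 0 < snd (X i).

Definition cont_on (T : R) (f : R -> R) : Prop :=
  forall t, 0 <= t <= T -> forall e, 0 < e -> exists del, 0 < del /\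
    forall s, 0 <= s <= T -> Rabs (s - t) < del -> Rabs (f s - f t) < e.

Definition is_sol (N : nat) (T : R) (ok : (nat -> R * R) -> Prop)
    (F : (nat -> R * R) -> nat -> R * R) (x0 : nat -> R * R)
    (X : nat -> R -> R * R) : Prop :=
  (forall i, (i < N)%nat -> X i 0 = x0 i) /\
  (forall t, 0 <= t <= T -> ok (fun j => X j t)) /\
  (forall i, (i < N)%nat ->
     cont_on T (fun s => fst (X i s)) /\ cont_on T (fun s => snd (X i s))) /\
  (forall i, (i < N)%nat -> forall t, 0 < t < T ->
     is_derive (fun s => fst (X i s)) t (fst (F (fun j => X j t) i)) /\
     is_derive (fun s => snd (X i s)) t (snd (F (fun j => X j t) i))).

Definition X0eps (zs rs eps : R) (Y0 : nat -> R * R) (i : nat) : R * R :=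
  (zs + fst (Y0 i) / sqrt (lnabs eps), rs + snd (Y0 i) / sqrt (lnabs eps)).

Definition Xtilde (zs rs gamma eps : R) (Yt : nat -> R -> R * R) (i : nat) (t : R) : R * R :=
  (zs + gamma / (4 * PI * rs) * t + fst (Yt i t) / sqrt (lnabs eps),
   rs + snd (Yt i t) / sqrt (lnabs eps)).

(* In the variables [Y = sqrt|ln eps| (X - (zs, rs) - gamma / (4 pi rs) t e_z)] the vortex system becomes
   [dY/dt = G_dl(Y)] with [dl = 1 / sqrt|ln eps|], and [G_dl] differs from the field [G_0] of the
   limit system only through the self-induced term [gamma / (4 pi X_r)], which is smooth in [dl].
   Near the initial configuration, whose radial components are [4 d0] apart, all the [G_dl] with
   [dl <= dl0] are bounded and Lipschitz with constants independent of [dl], and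
   [|G_dl - G_0| = O(dl)].  Picard iteration gives solutions on an interval [0, T] independent of
   [eps], continuous induction keeps every solution within [d0] of its initial configuration, and
   a Gronwall-type estimate gives [|Y - Ytilde| = O(dl)].  Undoing the scaling divides distances
   by [sqrt|ln eps|] once more, whence the bound [C / |ln eps|]. *)

From Stdlib Require Import Reals Lra List Lia Classical FunctionalExtensionality.
From Coquelicot Require Import Coquelicot.
Open Scope R_scope.

Lemma INR_le_pow2 (n : nat) : INR n <= 2 ^ n.
Proof.
  induction n as [|n IH]; [simpl; lra|].
  rewrite S_INR. simpl. assert (1 <= 2 ^ n) by (apply pow_R1_Rle; lra). lra.
Qed.

Lemma exists_div_pow2_lt (K eps : R) : 0 < eps -> exists n, K / 2 ^ n < eps.
Proof.
  intros he. destruct (INR_archimed eps K he) as [n hn]. exists n.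
  pose proof (INR_le_pow2 n). assert (hp : 0 < 2 ^ n) by (apply pow_lt; lra).
  apply (Rmult_lt_reg_r (2 ^ n)); auto. unfold Rdiv. rewrite Rmult_assoc, Rinv_l by lra.
  nra.
Qed.

Lemma le_of_le_add_div_pow2 (x y K : R) : (forall n, x <= y + K / 2 ^ n) -> x <= y.
Proof.
  intros H. apply Rnot_lt_le. intros hlt.
  destruct (exists_div_pow2_lt K (x - y) ltac:(lra)) as [n hn].
  specialize (H n). lra.
Qed.

Lemma Rabs_le_of_sqr_le (x y : R) : 0 <= y -> x * x <= y * y -> Rabs x <= y.
Proof.
  intros hy h. rewrite <- (Rabs_pos_eq y hy). apply Rsqr_le_abs_0. exact h.
Qed.

Lemma Rabs_div_le (x q X c : R) : 0 < c <= q -> Rabs x <= X -> Rabs (x / q) <= X / c.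
Proof.
  intros hc hx. unfold Rdiv. rewrite Rabs_mult, Rabs_inv, (Rabs_right q) by lra.
  assert (0 <= X) by (pose proof (Rabs_pos x); lra).
  apply Rle_trans with (X * / q).
  - apply Rmult_le_compat_r; [apply Rlt_le, Rinv_0_lt_compat; lra|lra].
  - apply Rmult_le_compat_l; auto. apply Rinv_le_contravar; lra.
Qed.

Lemma Rabs_div_pos_le (x X s : R) : 0 < s -> Rabs x <= X -> Rabs (x / s) <= X / s.
Proof. intros hs hx. apply Rabs_div_le; [lra|exact hx]. Qed.

Lemma continuous_of_lipschitz (f : R -> R) (t K : R) :
  (forall s, Rabs (f s - f t) <= K * Rabs (s - t)) -> continuous f t.
Proof.
  intros H. apply filterlim_locally. intros eps.
  assert (hK : 0 <= K).
  { specialize (H (t + 1)). replace (t + 1 - t) with 1 in H by ring. rewrite Rabs_R1 in H.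
    pose proof (Rabs_pos (f (t + 1) - f t)). lra. }
  assert (hp : 0 < eps / (K + 1)) by (apply Rdiv_lt_0_compat; [apply cond_pos|lra]).
  exists (mkposreal _ hp). intros y hy.
  change (Rabs (y - t) < eps / (K + 1)) in hy. change (Rabs (f y - f t) < eps).
  eapply Rle_lt_trans; [apply H|].
  apply Rmult_lt_compat_l with (r := K + 1) in hy; [|lra].
  replace ((K + 1) * (eps / (K + 1))) with (pos eps) in hy by (field; lra).
  pose proof (Rabs_pos (y - t)). nra.
Qed.

Lemma cont_on_ext (T : R) (f g : R -> R) :
  (forall t, 0 <= t <= T -> f t = g t) -> cont_on T f -> cont_on T g.
Proof.
  intros E H t ht e he. destruct (H t ht e he) as [d [hd Hd]].
  exists d; split; auto. intros s hs hst. rewrite <- !E by auto. auto.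
Qed.

Lemma cont_on_of_lipschitz (T : R) (f : R -> R) (K : R) : 0 <= K ->
  (forall s t, 0 <= s <= T -> 0 <= t <= T -> Rabs (f s - f t) <= K * Rabs (s - t)) -> cont_on T f.
Proof.
  intros hK H t ht e he. exists (e / (K + 1)). split; [apply Rdiv_lt_0_compat; lra|].
  intros s hs hst. eapply Rle_lt_trans; [apply H; auto|].
  apply Rmult_lt_compat_l with (r := K + 1) in hst; [|lra].
  replace ((K + 1) * (e / (K + 1))) with e in hst by (field; lra).
  pose proof (Rabs_pos (s - t)). nra.
Qed.

Lemma cont_on_plus_scal (T : R) (f g : R -> R) (c : R) :
  cont_on T f -> cont_on T g -> cont_on T (fun u => f u + c * g u).
Proof.
  intros Hf Hg t ht e he.
  assert (hc : 0 < 2 * (Rabs c + 1)) by (pose proof (Rabs_pos c); lra).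
  destruct (Hf t ht (e / 2)) as [d1 [hd1 H1]]; [lra|].
  destruct (Hg t ht (e / (2 * (Rabs c + 1)))) as [d2 [hd2 H2]]; [apply Rdiv_lt_0_compat; lra|].
  exists (Rmin d1 d2). split; [apply Rmin_pos; auto|]. intros s hs hst.
  specialize (H1 s hs (Rlt_le_trans _ _ _ hst (Rmin_l _ _))).
  specialize (H2 s hs (Rlt_le_trans _ _ _ hst (Rmin_r _ _))).
  assert (Rabs c * Rabs (g s - g t) <= e / 2).
  { apply Rle_trans with ((Rabs c + 1) * (e / (2 * (Rabs c + 1)))).
    - pose proof (Rabs_pos c). pose proof (Rabs_pos (g s - g t)). nra.
    - right. field. lra. }
  replace (f s + c * g s - (f t + c * g t)) with ((f s - f t) + c * (g s - g t)) by ring.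
  eapply Rle_lt_trans; [apply Rabs_triang|]. rewrite Rabs_mult. lra.
Qed.

Lemma cont_on_affine (T : R) (f : R -> R) (p q c : R) :
  cont_on T f -> cont_on T (fun u => p + q * u + c * f u).
Proof.
  intros H. apply cont_on_plus_scal; auto.
  apply (cont_on_of_lipschitz _ _ (Rabs q)); [apply Rabs_pos|].
  intros s t _ _. right. rewrite <- Rabs_mult. f_equal. ring.
Qed.

Lemma cont_on_minus (T : R) (f g : R -> R) :
  cont_on T f -> cont_on T g -> cont_on T (fun s => f s - g s).
Proof.
  intros Hf Hg. apply (cont_on_ext _ (fun s => f s + (-1) * g s)); [intros; ring|].
  apply cont_on_plus_scal; auto.
Qed.

Lemma cont_on_minus_const (T c : R) (f : R -> R) : cont_on T f -> cont_on T (fun s => f s - c).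
Proof.
  intros H. apply (cont_on_ext _ (fun u => - c + 0 * u + 1 * f u)); [intros; ring|].
  apply cont_on_affine; auto.
Qed.

Lemma is_derive_affine (f g : R -> R) (t a p q c : R) :
  (forall u, g u = p + q * u + c * f u) -> is_derive f t a -> is_derive g t (q + c * a).
Proof.
  intros E H. apply (is_derive_ext (fun u => p + q * u + c * f u)); [intros u; symmetry; apply E|].
  assert (Hpq : is_derive (fun u => p + q * u) t q).
  { pose proof (is_derive_plus (fun _ => p) (fun u => q * u) t zero q (is_derive_const p t)) as D.
    rewrite plus_zero_l in D. apply D.
    pose proof (is_derive_scal (fun u => u) t q 1 (is_derive_id (K := R_AbsRing) t)) as D1.
    rewrite Rmult_1_r in D1. exact D1. }
  exact (is_derive_plus _ _ t q (c * a) Hpq (is_derive_scal f t c a H)).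
Qed.

Lemma abs_sub_le_of_derive_bound (T K : R) (f df : R -> R) (t : R) :
  0 <= t <= T -> cont_on T f ->
  (forall s, 0 < s < t -> is_derive f s (df s)) ->
  (forall s, 0 < s < t -> Rabs (df s) <= K) ->
  Rabs (f t - f 0) <= K * t.
Proof.
  intros ht hf Hd HK.
  destruct (Req_dec t 0) as [e|ne].
  { rewrite e, Rminus_diag, Rabs_R0. lra. }
  assert (tp : 0 < t) by lra.
  assert (hK : 0 <= K) by (specialize (HK (t / 2) ltac:(lra)); pose proof (Rabs_pos (df (t / 2))); lra).
  assert (inner : forall a b, 0 < a < b -> b < t -> Rabs (f b - f a) <= K * (b - a)).
  { intros a b hab hbt.
    destruct (MVT_gen f a b df) as [c [hc Hc]].
    - rewrite Rmin_left, Rmax_right by lra. intros x hx. apply Hd. lra.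
    - rewrite Rmin_left, Rmax_right by lra. intros x hx.
      apply continuity_pt_filterlim.
      apply (ex_derive_continuous (K := R_AbsRing) (V := R_NormedModule)). eexists. apply Hd. lra.
    - rewrite Rmin_left, Rmax_right in hc by lra. rewrite Hc, Rabs_mult.
      rewrite (Rabs_right (b - a)) by lra. apply Rmult_le_compat_r; [lra|]. apply HK; lra. }
  (* The mean value theorem only applies on compact subintervals of (0, t); continuity at the
     endpoints closes the gap. *)
  apply Rnot_lt_le. intros hlt.
  set (e := (Rabs (f t - f 0) - K * t) / 3).
  assert (he : 0 < e) by (unfold e; lra).
  destruct (hf 0 ltac:(lra) e he) as [d0 [hd0 Hd0]].
  destruct (hf t ht e he) as [d1 [hd1 Hd1]].
  set (a := Rmin (d0 / 2) (t / 3)). set (b := Rmax (t - d1 / 2) (2 * t / 3)).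
  assert (ha1 : 0 < a) by (unfold a; apply Rmin_pos; lra).
  assert (ha2 : a <= t / 3) by apply Rmin_r. assert (ha3 : a <= d0 / 2) by apply Rmin_l.
  assert (hb1 : 2 * t / 3 <= b) by apply Rmax_r. assert (hb2 : t - d1 / 2 <= b) by apply Rmax_l.
  assert (hb3 : b < t) by (unfold b; apply Rmax_lub_lt; lra).
  specialize (Hd0 a ltac:(lra) ltac:(rewrite Rminus_0_r, Rabs_right; lra)).
  specialize (Hd1 b ltac:(lra) ltac:(rewrite Rabs_left; lra)).
  specialize (inner a b ltac:(lra) hb3).
  assert (K * (b - a) <= K * t) by (apply Rmult_le_compat_l; lra).
  revert Hd0 Hd1 inner hlt. unfold e. split_Rabs; lra.
Qed.

Lemma exists_common_radius (N : nat) (Q : nat -> R -> Prop) :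
  (forall i d d', 0 < d' <= d -> Q i d -> Q i d') ->
  (forall i, (i < N)%nat -> exists d, 0 < d /\ Q i d) ->
  exists d, 0 < d /\ forall i, (i < N)%nat -> Q i d.
Proof.
  intros Hm. induction N as [|N IH]; intros H.
  - exists 1. split; [lra|]. intros i hi; lia.
  - destruct IH as [d1 [hd1 H1]]. { intros i hi; apply H; lia. }
    destruct (H N ltac:(lia)) as [d2 [hd2 H2]].
    exists (Rmin d1 d2). split; [apply Rmin_pos; auto|].
    intros i hi. destruct (Nat.eq_dec i N) as [->|hne].
    + apply (Hm N d2); auto. split; [apply Rmin_pos; auto|apply Rmin_r].
    + apply (Hm i d1); auto. split; [apply Rmin_pos; auto|apply Rmin_l]. apply H1; lia.
Qed.

Definition pair_bounded (N : nat) (B : R) (a b : nat -> R -> R) (s : R) : Prop :=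
  forall i, (i < N)%nat -> Rabs (a i s) <= B /\ Rabs (b i s) <= B.

Lemma cont_on_abs_le_left_limit (T S B : R) (f : R -> R) : cont_on T f -> 0 <= S <= T ->
  Rabs (f 0) < B -> (forall s, 0 <= s < S -> Rabs (f s) <= B) -> Rabs (f S) <= B.
Proof.
  intros hf hS hf0 hfs. apply Rnot_lt_le. intros h.
  destruct (hf S hS (Rabs (f S) - B)) as [d [hd Hd]]; [lra|].
  destruct (Req_dec S 0) as [e|e]; [rewrite e in h; lra|].
  set (s := Rmax 0 (S - d / 2)).
  assert (hs1 : 0 <= s) by apply Rmax_l.
  assert (hs2 : s < S) by (unfold s; apply Rmax_lub_lt; lra).
  assert (hs3 : Rabs (s - S) < d) by (unfold s; apply Rmax_case_strong; intros; rewrite Rabs_left; lra).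
  specialize (Hd s ltac:(lra) hs3). specialize (hfs s ltac:(lra)).
  revert Hd hfs h. split_Rabs; lra.
Qed.

Lemma pair_bounded_near (N : nat) (T B B' S : R) (a b : nat -> R -> R) : B' < B -> 0 <= S <= T ->
  (forall i, (i < N)%nat -> cont_on T (a i) /\ cont_on T (b i)) -> pair_bounded N B' a b S ->
  exists d, 0 < d /\ forall s, 0 <= s <= T -> Rabs (s - S) < d -> pair_bounded N B a b s.
Proof.
  intros hB hS Hc HS.
  destruct (exists_common_radius N (fun i d => forall s, 0 <= s <= T -> Rabs (s - S) < d ->
               Rabs (a i s) <= B /\ Rabs (b i s) <= B)) as [d [hd Hd]].
  { intros i d d' hd' Hq s hs hss. apply Hq; auto. lra. }
  { intros i hi. destruct (Hc i hi) as [ca cb]. destruct (HS i hi) as [ga gb].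
    destruct (ca S hS (B - B')) as [d1 [hd1 Hd1]]; [lra|].
    destruct (cb S hS (B - B')) as [d2 [hd2 Hd2]]; [lra|].
    exists (Rmin d1 d2). split; [apply Rmin_pos; auto|].
    intros s hs hss.
    specialize (Hd1 s hs (Rlt_le_trans _ _ _ hss (Rmin_l _ _))).
    specialize (Hd2 s hs (Rlt_le_trans _ _ _ hss (Rmin_r _ _))).
    split; [revert Hd1 ga | revert Hd2 gb]; split_Rabs; lra. }
  exists d. split; auto. intros s hs hss i hi. apply Hd; auto.
Qed.

Lemma continuous_induction (N : nat) (T B B' : R) (a b : nat -> R -> R) :
  0 <= T -> B' < B ->
  (forall i, (i < N)%nat -> cont_on T (a i) /\ cont_on T (b i)) ->
  (forall i, (i < N)%nat -> Rabs (a i 0) < B /\ Rabs (b i 0) < B) ->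
  (forall t, 0 <= t <= T -> (forall s, 0 <= s <= t -> pair_bounded N B a b s) ->
     pair_bounded N B' a b t) ->
  forall t, 0 <= t <= T -> pair_bounded N B' a b t.
Proof.
  intros hT hB Hc H0 Hstep.
  set (E := fun t => 0 <= t <= T /\ forall s, 0 <= s <= t -> pair_bounded N B a b s).
  assert (E0 : E 0).
  { split; [lra|]. intros s hs i hi. replace s with 0 by lra. destruct (H0 i hi); split; lra. }
  destruct (completeness E) as [S [HS1 HS2]].
  { exists T. intros x [hx _]. lra. }
  { exists 0; exact E0. }
  assert (hS : 0 <= S <= T) by (split; [apply HS1; exact E0|apply HS2; intros x [hx _]; lra]).
  assert (below : forall s, 0 <= s < S -> pair_bounded N B a b s).
  { intros s hs. destruct (classic (exists t, E t /\ s < t)) as [[t [[ht1 ht2] hst]]|hn].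
    - apply ht2. lra.
    - exfalso. assert (S <= s); [|lra]. apply HS2. intros x hx.
      destruct (Rle_dec x s) as [h|h]; auto. exfalso; apply hn. exists x; split; auto; lra. }
  assert (upto_sup : forall s, 0 <= s <= S -> pair_bounded N B a b s).
  { intros s hs. destruct (Req_dec s S) as [->|hne]; [|apply below; lra].
    intros i hi. destruct (Hc i hi) as [ca cb]. destruct (H0 i hi) as [a0 b0].
    split; apply (cont_on_abs_le_left_limit T); auto; intros s hs'; apply (below s hs' i hi). }
  assert (HST : S = T).
  { destruct (Req_dec S T) as [e|ne]; auto. exfalso.
    destruct (pair_bounded_near N T B B' S a b hB hS Hc (Hstep S hS upto_sup)) as [d [hd Hd]].
    set (t' := Rmin T (S + d / 2)).
    assert (ht' : S < t' <= T) by (split; [unfold t'; apply Rmin_glb_lt; lra|apply Rmin_l]).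
    assert (Et' : E t').
    { split; [lra|]. intros s hs. destruct (Rle_dec s S) as [h|h]; [apply upto_sup; lra|].
      apply Hd; [lra|]. assert (t' <= S + d / 2) by apply Rmin_r. rewrite Rabs_right; lra. }
    specialize (HS1 t' Et'). lra. }
  intros t ht. apply Hstep; auto. intros s hs. apply upto_sup. lra.
Qed.

Lemma sumR_ext (n : nat) (f g : nat -> R) :
  (forall j, (j < n)%nat -> f j = g j) -> sumR n f = sumR n g.
Proof. induction n; simpl; intros H; auto. rewrite IHn, H; auto; intros; apply H; lia. Qed.

Lemma sumR_scal (n : nat) (c : R) (f : nat -> R) : sumR n (fun j => c * f j) = c * sumR n f.
Proof. induction n; simpl; [ring|]. rewrite IHn; ring. Qed.

Lemma sumR_minus (n : nat) (f g : nat -> R) : sumR n f - sumR n g = sumR n (fun j => f j - g j).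
Proof. induction n; simpl; [ring|]. rewrite <- IHn; ring. Qed.

Lemma sumR_abs_le (n : nat) (f : nat -> R) (c : R) :
  (forall j, (j < n)%nat -> Rabs (f j) <= c) -> Rabs (sumR n f) <= INR n * c.
Proof.
  induction n; intros H. { simpl; rewrite Rabs_R0; lra. }
  rewrite S_INR. simpl. eapply Rle_trans; [apply Rabs_triang|].
  assert (Rabs (sumR n f) <= INR n * c) by (apply IHn; intros; apply H; lia).
  specialize (H n ltac:(lia)). lra.
Qed.

Lemma sum_ne_abs_le (N i : nat) (f : nat -> R) (c : R) : 0 <= c ->
  (forall j, (j < N)%nat -> j <> i -> Rabs (f j) <= c) ->
  Rabs (sum_ne N i f) <= INR N * c.
Proof.
  intros hc H. unfold sum_ne. apply sumR_abs_le.
  intros j hj. destruct (Nat.eqb_spec j i).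
  - rewrite Rabs_R0; auto.
  - apply H; auto.
Qed.

Lemma sum_ne_minus_abs_le (N i : nat) (f g : nat -> R) (c : R) : 0 <= c ->
  (forall j, (j < N)%nat -> j <> i -> Rabs (f j - g j) <= c) ->
  Rabs (sum_ne N i f - sum_ne N i g) <= INR N * c.
Proof.
  intros hc H. unfold sum_ne. rewrite sumR_minus. apply sumR_abs_le.
  intros j hj. destruct (Nat.eqb_spec j i).
  - rewrite Rminus_0_r, Rabs_R0; auto.
  - apply H; auto.
Qed.

Lemma sum_ne_scal (N i : nat) (f g : nat -> R) (c : R) :
  (forall j, (j < N)%nat -> j <> i -> f j = c * g j) ->
  sum_ne N i f = c * sum_ne N i g.
Proof.
  intros H. unfold sum_ne. rewrite <- sumR_scal. apply sumR_ext.
  intros j hj. destruct (Nat.eqb_spec j i); [ring|]. apply H; auto.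
Qed.

Lemma ex_RInt_of_continuous (g : R -> R) (a b : R) : (forall x, continuous g x) -> ex_RInt g a b.
Proof. intros H. apply (ex_RInt_continuous (V := R_CompleteNormedModule)). intros; apply H. Qed.

Lemma RInt_abs_le (g : R -> R) (T M c : R) : (forall x, continuous g x) ->
  (forall s, 0 <= s <= T -> Rabs (g s) <= M) -> 0 <= c <= T -> Rabs (RInt g 0 c) <= M * T.
Proof.
  intros hc hM hcT.
  assert (hM0 : 0 <= M) by (specialize (hM 0 ltac:(lra)); pose proof (Rabs_pos (g 0)); lra).
  eapply Rle_trans.
  { apply abs_RInt_le_const; [lra|apply ex_RInt_of_continuous; auto|intros t ht; apply hM; lra]. }
  rewrite Rmult_comm. apply Rmult_le_compat_l; lra.
Qed.

Lemma RInt_lipschitz (g : R -> R) (T M a b : R) : (forall x, continuous g x) ->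
  (forall s, 0 <= s <= T -> Rabs (g s) <= M) -> 0 <= a <= T -> 0 <= b <= T ->
  Rabs (RInt g 0 b - RInt g 0 a) <= M * Rabs (b - a).
Proof.
  intros hc hM.
  assert (W : forall a b, 0 <= a <= T -> 0 <= b <= T -> a <= b ->
                Rabs (RInt g 0 b - RInt g 0 a) <= M * Rabs (b - a)).
  { intros a' b' ha hb hab.
    pose proof (RInt_Chasles g 0 a' b' (ex_RInt_of_continuous g _ _ hc)
                  (ex_RInt_of_continuous g _ _ hc)) as E.
    change (RInt g 0 a' + RInt g a' b' = RInt g 0 b') in E.
    rewrite (Rabs_right (b' - a')) by lra. rewrite Rmult_comm, <- E.
    unfold Rminus. rewrite Rplus_comm, <- Rplus_assoc, Rplus_opp_l, Rplus_0_l.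
    apply abs_RInt_le_const; auto; [apply ex_RInt_of_continuous; auto|].
    intros t ht. apply hM. lra. }
  intros ha hb. destruct (Rle_dec a b) as [h|h].
  - apply W; auto.
  - rewrite Rabs_minus_sym, (Rabs_minus_sym b). apply W; auto. lra.
Qed.

Lemma RInt_minus_abs_le (g1 g2 : R -> R) (c K : R) :
  (forall x, continuous g1 x) -> (forall x, continuous g2 x) ->
  0 <= c -> (forall s, 0 <= s <= c -> Rabs (g1 s - g2 s) <= K) ->
  Rabs (RInt g1 0 c - RInt g2 0 c) <= c * K.
Proof.
  intros h1 h2 hc H.
  pose proof (RInt_minus g1 g2 0 c (ex_RInt_of_continuous g1 _ _ h1)
                (ex_RInt_of_continuous g2 _ _ h2)) as E.
  change (RInt (fun x => g1 x - g2 x) 0 c = RInt g1 0 c - RInt g2 0 c) in E.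
  rewrite <- E. replace c with (c - 0) at 2 by ring. apply abs_RInt_le_const; auto.
  apply (ex_RInt_continuous (V := R_CompleteNormedModule)). intros z _.
  apply (continuous_minus (K := R_AbsRing) (V := R_NormedModule) g1 g2); auto.
Qed.

(** * Picard iteration *)

Lemma telescoping_geometric_bound (u : nat -> R) (K : R) :
  (forall n, Rabs (u (S n) - u n) <= K / 2 ^ n) ->
  forall n k, Rabs (u (n + k)%nat - u n) <= 2 * K / 2 ^ n - 2 * K / 2 ^ (n + k).
Proof.
  intros H n k. induction k as [|k IH].
  - rewrite Nat.add_0_r, Rminus_diag, Rabs_R0. lra.
  - replace (n + S k)%nat with (S (n + k)) by lia.
    specialize (H (n + k)%nat).
    assert (E : 2 * K / 2 ^ S (n + k) = K / 2 ^ (n + k)) by (simpl; field; apply pow_nonzero; lra).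
    rewrite E.
    replace (u (S (n + k)) - u n)
      with ((u (S (n + k)) - u (n + k)%nat) + (u (n + k)%nat - u n)) by ring.
    eapply Rle_trans; [apply Rabs_triang|].
    assert (E2 : 2 * K / 2 ^ (n + k) = K / 2 ^ (n + k) + K / 2 ^ (n + k))
      by (field; apply pow_nonzero; lra).
    rewrite E2 in IH. lra.
Qed.

Lemma geometric_cauchy (u : nat -> R) (K : R) :
  (forall n, Rabs (u (S n) - u n) <= K / 2 ^ n) ->
  forall n m, (n <= m)%nat -> Rabs (u m - u n) <= 2 * K / 2 ^ n.
Proof.
  intros H n m hnm. replace m with (n + (m - n))%nat by lia.
  pose proof (telescoping_geometric_bound u K H n (m - n)).
  assert (hK : 0 <= K).
  { specialize (H 0%nat). simpl in H. pose proof (Rabs_pos (u 1%nat - u 0%nat)). lra. }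
  assert (0 <= 2 * K / 2 ^ (n + (m - n))) by (apply Rdiv_le_0_compat; [lra|apply pow_lt; lra]).
  lra.
Qed.

Lemma is_lim_seq_abs_sub_le (u : nat -> R) (l a B : R) (n : nat) : is_lim_seq u l ->
  (forall m, (n <= m)%nat -> Rabs (u m - a) <= B) -> Rabs (l - a) <= B.
Proof.
  intros hl H. apply Rnot_lt_le. intros hlt.
  apply is_lim_seq_spec in hl.
  assert (he : 0 < Rabs (l - a) - B) by lra.
  destruct (hl (mkposreal _ he)) as [N0 HN]. simpl in HN.
  specialize (HN (Nat.max N0 n) ltac:(lia)). specialize (H (Nat.max N0 n) ltac:(lia)).
  revert HN H hlt. split_Rabs; lra.
Qed.

Lemma geometric_lim (u : nat -> R) (K : R) :
  (forall n, Rabs (u (S n) - u n) <= K / 2 ^ n) ->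
  is_lim_seq u (real (Lim_seq u)) /\ forall n, Rabs (real (Lim_seq u) - u n) <= 2 * K / 2 ^ n.
Proof.
  intros H.
  assert (ex : ex_finite_lim_seq u).
  { apply ex_lim_seq_cauchy_corr. intros eps.
    destruct (exists_div_pow2_lt (2 * K) (eps / 2)) as [n0 hn0]. { pose proof (cond_pos eps); lra. }
    exists n0. intros n m hn hm.
    pose proof (geometric_cauchy u K H n0 n hn). pose proof (geometric_cauchy u K H n0 m hm).
    revert H0 H1 hn0. split_Rabs; lra. }
  destruct ex as [l hl]. rewrite (is_lim_seq_unique u l hl). simpl. split; auto.
  intros n. apply (is_lim_seq_abs_sub_le u l (u n) _ n hl). intros m hm. apply geometric_cauchy; auto.
Qed.

Definition close_config (N : nat) (eta : R) (Y Z : nat -> R * R) : Prop :=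
  forall i, (i < N)%nat ->
    Rabs (fst (Y i) - fst (Z i)) <= eta /\ Rabs (snd (Y i) - snd (Z i)) <= eta.

Definition in_box (N : nat) (Y0 : nat -> R * R) (rho : R) (Y : nat -> R * R) : Prop :=
  close_config N rho Y Y0.

Lemma close_config_le (N : nat) (a b : R) (Y Z : nat -> R * R) :
  a <= b -> close_config N a Y Z -> close_config N b Y Z.
Proof. intros h H i hi. destruct (H i hi); split; lra. Qed.

Lemma close_config_sym (N : nat) (a : R) (Y Z : nat -> R * R) :
  close_config N a Y Z -> close_config N a Z Y.
Proof. intros H i hi. rewrite !(Rabs_minus_sym (fst (Z i))), !(Rabs_minus_sym (snd (Z i))). auto. Qed.

Definition bounded_lipschitz_on_box (N : nat) (Y0 : nat -> R * R) (rho M L : R)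
    (G : (nat -> R * R) -> nat -> R * R) : Prop :=
  (forall Y, in_box N Y0 rho Y -> forall i, (i < N)%nat ->
     Rabs (fst (G Y i)) <= M /\ Rabs (snd (G Y i)) <= M) /\
  (forall Y Z eta, in_box N Y0 rho Y -> in_box N Y0 rho Z -> close_config N eta Y Z ->
     close_config N (L * eta) (G Y) (G Z)).

Definition lipschitz_in_box (N : nat) (Y0 : nat -> R * R) (rho M : R) (Y : nat -> R -> R * R) : Prop :=
  (forall t, in_box N Y0 rho (fun j => Y j t)) /\
  (forall t t', close_config N (M * Rabs (t - t')) (fun j => Y j t) (fun j => Y j t')).

Definition clamp (T t : R) : R := Rmax 0 (Rmin T t).

Lemma clamp_in (T t : R) : 0 <= T -> 0 <= clamp T t <= T.
Proof. intros hT. unfold clamp. split; [apply Rmax_l|]. apply Rmax_lub; auto. apply Rmin_l. Qed.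

Lemma clamp_id (T t : R) : 0 <= t <= T -> clamp T t = t.
Proof. intros h. unfold clamp. rewrite Rmin_right, Rmax_right by lra. reflexivity. Qed.

Lemma clamp_lipschitz (T t t' : R) : Rabs (clamp T t - clamp T t') <= Rabs (t - t').
Proof. unfold clamp, Rmax, Rmin. repeat destruct Rle_dec; split_Rabs; lra. Qed.

(* Integrating up to [clamp T t] makes the Picard iterates total functions of time,
   constant outside [0, T]. *)
Definition picard_step (G : (nat -> R * R) -> nat -> R * R) (Y0 : nat -> R * R) (T : R)
    (Y : nat -> R -> R * R) : nat -> R -> R * R :=
  fun i t => (fst (Y0 i) + RInt (fun s => fst (G (fun j => Y j s) i)) 0 (clamp T t),
              snd (Y0 i) + RInt (fun s => snd (G (fun j => Y j s) i)) 0 (clamp T t)).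

Fixpoint picard_iter (G : (nat -> R * R) -> nat -> R * R) (Y0 : nat -> R * R) (T : R)
    (n : nat) : nat -> R -> R * R :=
  match n with
  | O => fun i _ => Y0 i
  | S n => picard_step G Y0 T (picard_iter G Y0 T n)
  end.

Definition picard_limit (G : (nat -> R * R) -> nat -> R * R) (Y0 : nat -> R * R) (T : R)
    (i : nat) (t : R) : R * R :=
  (real (Lim_seq (fun n => fst (picard_iter G Y0 T n i t))),
   real (Lim_seq (fun n => snd (picard_iter G Y0 T n i t)))).

Lemma is_derive_RInt_clamp (g : R -> R) (c0 T t : R) : (forall x, continuous g x) -> 0 < t < T ->
  is_derive (fun s => c0 + RInt g 0 (clamp T s)) t (g t).
Proof.
  intros hc ht.
  assert (D1 : is_derive (RInt g 0) t (g t)).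
  { apply (is_derive_RInt g (RInt g 0) 0 t); [|apply hc].
    exists (mkposreal 1 Rlt_0_1). intros y _.
    apply (RInt_correct (V := R_CompleteNormedModule)). apply ex_RInt_of_continuous; auto. }
  pose proof (is_derive_plus (fun _ => c0) (RInt g 0) t zero (g t) (is_derive_const c0 t) D1) as D2.
  rewrite plus_zero_l in D2.
  apply (is_derive_ext_loc (fun x => plus c0 (RInt g 0 x))); auto.
  assert (he : 0 < Rmin t (T - t)) by (apply Rmin_pos; lra).
  exists (mkposreal _ he). intros y hy. change (Rabs (y - t) < Rmin t (T - t)) in hy.
  assert (Rmin t (T - t) <= t) by apply Rmin_l. assert (Rmin t (T - t) <= T - t) by apply Rmin_r.
  rewrite (clamp_id T y); [reflexivity|]. revert hy; split_Rabs; lra.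
Qed.

Section Picard.

Variables (N : nat) (Y0 : nat -> R * R) (rho M L T : R).
Variable G : (nat -> R * R) -> nat -> R * R.
Hypothesis G_ok : bounded_lipschitz_on_box N Y0 rho M L G.
Hypotheses (rho_ge0 : 0 <= rho) (M_ge0 : 0 <= M) (L_ge0 : 0 <= L) (T_ge0 : 0 <= T).
Hypotheses (MT_le : M * T <= rho) (LT_le : L * T <= 1 / 2).

Lemma field_along_continuous (Y : nat -> R -> R * R) (i : nat) :
  lipschitz_in_box N Y0 rho M Y -> (i < N)%nat -> forall x,
    continuous (fun s => fst (G (fun j => Y j s) i)) x /\
    continuous (fun s => snd (G (fun j => Y j s) i)) x.
Proof.
  destruct G_ok as [_ Hl]. intros [P1 P2] hi x.
  split; apply (continuous_of_lipschitz _ _ (L * M)); intros s;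
    destruct (Hl _ _ _ (P1 s) (P1 x) (P2 s x) i hi); rewrite Rmult_assoc; auto.
Qed.

Lemma picard_step_lipschitz_in_box (Y : nat -> R -> R * R) :
  lipschitz_in_box N Y0 rho M Y -> lipschitz_in_box N Y0 rho M (picard_step G Y0 T Y).
Proof.
  intros hY. destruct G_ok as [Hb _]. pose proof hY as [P1 _].
  assert (bd : forall i, (i < N)%nat -> forall s, 0 <= s <= T ->
     Rabs (fst (G (fun j => Y j s) i)) <= M /\ Rabs (snd (G (fun j => Y j s) i)) <= M).
  { intros i hi s hs. apply Hb; auto. }
  split.
  - intros t i hi. unfold picard_step; cbn [fst snd].
    pose proof (clamp_in T t T_ge0) as hc.
    rewrite !Rplus_minus_l.
    split; (eapply Rle_trans; [apply (RInt_abs_le _ T M); auto;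
      [intros x; apply (field_along_continuous Y i hY hi x)|intros s hs; apply (bd i hi s hs)]|]); lra.
  - intros t t' i hi. unfold picard_step; cbn [fst snd].
    pose proof (clamp_lipschitz T t t').
    rewrite !Rminus_plus_l_l.
    split; (eapply Rle_trans; [apply (RInt_lipschitz _ T M); try apply clamp_in; auto;
      [intros x; apply (field_along_continuous Y i hY hi x)|intros s hs; apply (bd i hi s hs)]|]);
      apply Rmult_le_compat_l; auto.
Qed.

Lemma picard_iter_lipschitz_in_box (n : nat) : lipschitz_in_box N Y0 rho M (picard_iter G Y0 T n).
Proof.
  induction n as [|n IH].
  - split.
    + intros t i hi. simpl. rewrite !Rminus_diag, Rabs_R0. lra.
    + intros t t' i hi. simpl. rewrite !Rminus_diag, Rabs_R0.
      pose proof (Rabs_pos (t - t')). split; apply Rmult_le_pos; lra.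
  - apply picard_step_lipschitz_in_box; auto.
Qed.

Lemma picard_step_close (Y Z : nat -> R -> R * R) (eta : R) :
  lipschitz_in_box N Y0 rho M Y -> lipschitz_in_box N Y0 rho M Z ->
  (forall s, close_config N eta (fun j => Y j s) (fun j => Z j s)) ->
  forall t, close_config N (clamp T t * (L * eta))
              (fun j => picard_step G Y0 T Y j t) (fun j => picard_step G Y0 T Z j t).
Proof.
  intros hY hZ Hc t i hi. destruct G_ok as [_ Hl]. pose proof hY as [Y1 _]. pose proof hZ as [Z1 _].
  unfold picard_step; cbn [fst snd]. pose proof (clamp_in T t T_ge0) as hc.
  rewrite !Rminus_plus_l_l.
  split; apply RInt_minus_abs_le; try lra;
    try (intros x; apply (field_along_continuous _ i hY hi x));
    try (intros x; apply (field_along_continuous _ i hZ hi x));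
    intros s hs; apply (Hl _ _ _ (Y1 s) (Z1 s) (Hc s) i hi).
Qed.

Lemma clamp_contraction (t a : R) : 0 <= a -> clamp T t * (L * a) <= a / 2.
Proof.
  intros ha. pose proof (clamp_in T t T_ge0).
  apply Rle_trans with ((L * T) * a); [|nra].
  replace (clamp T t * (L * a)) with ((L * clamp T t) * a) by ring.
  apply Rmult_le_compat_r; auto. apply Rmult_le_compat_l; lra.
Qed.

Lemma picard_iter_contract (n : nat) (t : R) :
  close_config N (rho / 2 ^ n)
    (fun j => picard_iter G Y0 T (S n) j t) (fun j => picard_iter G Y0 T n j t).
Proof.
  revert t. induction n as [|n IH]; intros t.
  - simpl pow. rewrite Rdiv_1_r. apply (proj1 (picard_iter_lipschitz_in_box 1) t).
  - pose proof (picard_step_close _ _ _ (picard_iter_lipschitz_in_box (S n))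
                  (picard_iter_lipschitz_in_box n) IH t) as D.
    assert (hp : 0 < 2 ^ n) by (apply pow_lt; lra).
    assert (hr : 0 <= rho / 2 ^ n) by (apply Rdiv_le_0_compat; lra).
    apply (close_config_le _ _ _ _ _ (clamp_contraction t _ hr)) in D.
    replace (rho / 2 ^ S n) with (rho / 2 ^ n / 2) by (simpl; field; lra). exact D.
Qed.

Lemma picard_limit_spec :
  (forall n t, close_config N (2 * rho / 2 ^ n)
                 (fun j => picard_limit G Y0 T j t) (fun j => picard_iter G Y0 T n j t)) /\
  lipschitz_in_box N Y0 rho M (picard_limit G Y0 T).
Proof.
  assert (GL : forall t i, (i < N)%nat ->
     (is_lim_seq (fun n => fst (picard_iter G Y0 T n i t)) (fst (picard_limit G Y0 T i t)) /\
      forall n, Rabs (fst (picard_limit G Y0 T i t) - fst (picard_iter G Y0 T n i t))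
                  <= 2 * rho / 2 ^ n) /\
     (is_lim_seq (fun n => snd (picard_iter G Y0 T n i t)) (snd (picard_limit G Y0 T i t)) /\
      forall n, Rabs (snd (picard_limit G Y0 T i t) - snd (picard_iter G Y0 T n i t))
                  <= 2 * rho / 2 ^ n)).
  { intros t i hi. unfold picard_limit; cbn [fst snd].
    split; apply geometric_lim; intros n; apply (picard_iter_contract n t i hi). }
  assert (CL : forall n t, close_config N (2 * rho / 2 ^ n)
                 (fun j => picard_limit G Y0 T j t) (fun j => picard_iter G Y0 T n j t)).
  { intros n t i hi. destruct (GL t i hi) as [[_ a] [_ b]]. auto. }
  split; auto. split.
  - intros t i hi. destruct (GL t i hi) as [[l1 _] [l2 _]].
    split; [apply (is_lim_seq_abs_sub_le _ _ _ _ 0 l1)|apply (is_lim_seq_abs_sub_le _ _ _ _ 0 l2)];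
      intros k _; apply (proj1 (picard_iter_lipschitz_in_box k) t i hi).
  - intros t t' i hi.
    assert (E : forall n, 2 * rho / 2 ^ n + 2 * rho / 2 ^ n = 4 * rho / 2 ^ n)
      by (intros n; field; apply pow_nonzero; lra).
    split; apply (le_of_le_add_div_pow2 _ _ (4 * rho)); intros n; rewrite <- E;
      destruct (CL n t i hi) as [a1 b1]; destruct (CL n t' i hi) as [a2 b2];
      destruct (proj2 (picard_iter_lipschitz_in_box n) t t' i hi) as [c1 c2];
      revert a1 b1 a2 b2 c1 c2; split_Rabs; lra.
Qed.

Lemma picard_limit_fixed (t : R) (i : nat) : (i < N)%nat ->
  picard_limit G Y0 T i t = picard_step G Y0 T (picard_limit G Y0 T) i t.
Proof.
  intros hi. destruct picard_limit_spec as [CL YO].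
  assert (B : forall n, close_config N (2 * rho / 2 ^ n) (fun j => picard_limit G Y0 T j t)
                          (fun j => picard_step G Y0 T (picard_limit G Y0 T) j t)).
  { intros n j hj.
    assert (hcl : forall s, close_config N (2 * rho / 2 ^ n)
                    (fun k => picard_iter G Y0 T n k s) (fun k => picard_limit G Y0 T k s)).
    { intros s. apply close_config_sym, CL. }
    assert (hp : 0 < 2 ^ n) by (apply pow_lt; lra).
    pose proof (picard_step_close _ _ _ (picard_iter_lipschitz_in_box n) YO hcl t j hj) as [d1 d2].
    pose proof (clamp_contraction t (2 * rho / 2 ^ n) ltac:(apply Rdiv_le_0_compat; lra)) as k1.
    destruct (CL (S n) t j hj) as [e1 e2].
    change (picard_iter G Y0 T (S n)) with (picard_step G Y0 T (picard_iter G Y0 T n)) in e1, e2.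
    assert (k2 : 2 * rho / 2 ^ S n = 2 * rho / 2 ^ n / 2) by (simpl pow; field; lra).
    cbv beta in d1, d2, e1, e2 |- *. rewrite k2 in e1, e2. revert d1 d2 e1 e2 k1. split_Rabs; lra. }
  rewrite (surjective_pairing (picard_limit G Y0 T i t)),
          (surjective_pairing (picard_step G Y0 T (picard_limit G Y0 T) i t)).
  f_equal; apply Rminus_diag_uniq, Rabs_eq_0, Rle_antisym; try apply Rabs_pos;
    apply (le_of_le_add_div_pow2 _ _ (2 * rho)); intros n; destruct (B n i hi); lra.
Qed.

Lemma picard_existence :
  exists Y, is_sol N T (fun _ => True) G Y0 Y /\ forall t, in_box N Y0 rho (fun j => Y j t).
Proof.
  destruct picard_limit_spec as [_ YO].
  pose proof picard_limit_fixed as FX.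
  exists (picard_limit G Y0 T). split; [|apply YO]. split; [|split; [|split]].
  - intros i hi. rewrite FX by auto. unfold picard_step. rewrite (clamp_id T 0) by lra.
    rewrite !RInt_point. change (zero : R) with 0. rewrite !Rplus_0_r. destruct (Y0 i); auto.
  - auto.
  - intros i hi. destruct YO as [_ P2].
    split; apply (cont_on_of_lipschitz _ _ M M_ge0); intros s t _ _; destruct (P2 s t i hi); auto.
  - intros i hi t ht.
    split; [apply (is_derive_ext (fun s => fst (picard_step G Y0 T (picard_limit G Y0 T) i s)))
           |apply (is_derive_ext (fun s => snd (picard_step G Y0 T (picard_limit G Y0 T) i s)))];
      try (intros s; rewrite FX; auto);
      apply is_derive_RInt_clamp; auto; intros x; apply (field_along_continuous _ i YO hi x).
Qed.

End Picard.

(** * A priori estimates *)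

Lemma is_sol_in_box (N : nat) (T : R) (ok : (nat -> R * R) -> Prop)
    (G : (nat -> R * R) -> nat -> R * R) (Y0 : nat -> R * R) (rho M L : R) (Y : nat -> R -> R * R) :
  0 <= T -> 0 <= M -> M * T < rho -> bounded_lipschitz_on_box N Y0 rho M L G ->
  is_sol N T ok G Y0 Y -> forall t, 0 <= t <= T -> in_box N Y0 (M * T) (fun j => Y j t).
Proof.
  intros hT hM hMT [Hb _] [H0 [_ [Hc Hd]]] t ht i hi.
  assert (0 <= M * T) by (apply Rmult_le_pos; lra).
  apply (continuous_induction N T rho (M * T)
           (fun i t => fst (Y i t) - fst (Y0 i)) (fun i t => snd (Y i t) - snd (Y0 i))); auto.
  - intros k hk. destruct (Hc k hk).
    split; apply cont_on_minus_const; auto.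
  - intros k hk. rewrite (H0 k hk), !Rminus_diag, Rabs_R0. lra.
  - intros t' ht' Hg k hk.
    assert (Kin : forall s, 0 < s < t' -> in_box N Y0 rho (fun j => Y j s)).
    { intros s hs j hj. apply (Hg s ltac:(lra) j hj). }
    rewrite <- (H0 k hk).
    assert (hMt : M * t' <= M * T) by (apply Rmult_le_compat_l; lra).
    destruct (Hc k hk) as [c1 c2].
    split; (eapply Rle_trans; [|exact hMt]);
      [apply (abs_sub_le_of_derive_bound T M (fun s => fst (Y k s))
                (fun s => fst (G (fun j => Y j s) k)))
      |apply (abs_sub_le_of_derive_bound T M (fun s => snd (Y k s))
                (fun s => snd (G (fun j => Y j s) k)))];
      auto;
      intros s hs; try (apply Hd; auto; lra); apply (Hb _ (Kin s hs) k hk).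
Qed.

Lemma abs_sub_le_of_derive_sub_bound (T K t : R) (f g df dg : R -> R) :
  0 <= t <= T -> cont_on T f -> cont_on T g -> f 0 = g 0 ->
  (forall s, 0 < s < t -> is_derive f s (df s) /\ is_derive g s (dg s)) ->
  (forall s, 0 < s < t -> Rabs (df s - dg s) <= K) ->
  Rabs (f t - g t) <= K * t.
Proof.
  intros ht hf hg e0 Hd HK.
  replace (f t - g t) with ((f t - g t) - (f 0 - g 0)) by (rewrite e0; ring).
  apply (abs_sub_le_of_derive_bound T K (fun s => f s - g s) (fun s => df s - dg s)); auto.
  - apply cont_on_minus; auto.
  - intros s hs. destruct (Hd s hs). apply (is_derive_minus (V := R_NormedModule)); auto.
Qed.

(* Continuous induction on the bound [3 c T], which the mean value theorem improves
   to [(3 L T + 1) c T <= 5/2 c T]. *)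
Lemma is_sol_close (N : nat) (T : R) (ok1 ok2 : (nat -> R * R) -> Prop)
    (G1 G2 : (nat -> R * R) -> nat -> R * R) (Y0 : nat -> R * R) (rho M L c : R)
    (Y Z : nat -> R -> R * R) :
  0 <= T -> 0 <= L -> L * T <= 1 / 2 -> 0 < c * T ->
  bounded_lipschitz_on_box N Y0 rho M L G1 ->
  (forall A, in_box N Y0 rho A -> close_config N c (G1 A) (G2 A)) ->
  is_sol N T ok1 G1 Y0 Y -> is_sol N T ok2 G2 Y0 Z ->
  (forall t, 0 <= t <= T -> in_box N Y0 rho (fun j => Y j t)) ->
  (forall t, 0 <= t <= T -> in_box N Y0 rho (fun j => Z j t)) ->
  forall t, 0 <= t <= T -> close_config N (3 * c * T) (fun j => Y j t) (fun j => Z j t).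
Proof.
  intros hT hL hLT hcT [_ Hl] Hdf [Y0e [_ [Yc Yd]]] [Z0e [_ [Zc Zd]]] YK ZK t ht i hi.
  assert (hc : 0 < c) by (destruct (Rle_dec c 0); [nra|lra]).
  assert (R1 : pair_bounded N (5 / 2 * c * T) (fun i t => fst (Y i t) - fst (Z i t))
                 (fun i t => snd (Y i t) - snd (Z i t)) t).
  { apply (continuous_induction N T (3 * c * T)); auto; [nra| | |].
    - intros k hk. destruct (Yc k hk), (Zc k hk). split; apply cont_on_minus; auto.
    - intros k hk. rewrite (Y0e k hk), (Z0e k hk), !Rminus_diag, Rabs_R0. split; nra.
    - intros t' ht' Hg k hk.
      assert (bd : forall s, 0 < s < t' -> close_config N (L * (3 * c * T) + c)
                   (G1 (fun j => Y j s)) (G2 (fun j => Z j s))).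
      { intros s hs j hj.
        assert (hs' : 0 <= s <= T) by lra.
        assert (cl : close_config N (3 * c * T) (fun j => Y j s) (fun j => Z j s)).
        { intros l hl. apply (Hg s ltac:(lra) l hl). }
        destruct (Hl _ _ _ (YK s hs') (ZK s hs') cl j hj) as [a1 a2].
        destruct (Hdf _ (ZK s hs') j hj) as [b1 b2].
        split; [revert a1 b1|revert a2 b2]; split_Rabs; lra. }
      assert (fin : (L * (3 * c * T) + c) * t' <= 5 / 2 * c * T).
      { assert (L * (3 * c * T) * t' <= 3 * c * T * (1 / 2)).
        { replace (L * (3 * c * T) * t') with ((3 * c * T) * (L * t')) by ring.
          apply Rmult_le_compat_l; [nra|].
          apply Rle_trans with (L * T); [apply Rmult_le_compat_l|]; lra. }
        nra. }
      destruct (Yc k hk) as [yc1 yc2]. destruct (Zc k hk) as [zc1 zc2].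
      assert (e0 : Y k 0 = Z k 0) by (rewrite (Y0e k hk), (Z0e k hk); reflexivity).
      split; (eapply Rle_trans; [|exact fin]).
      + apply (abs_sub_le_of_derive_sub_bound T _ _ (fun s => fst (Y k s)) (fun s => fst (Z k s))
                 (fun s => fst (G1 (fun j => Y j s) k)) (fun s => fst (G2 (fun j => Z j s) k)));
          auto; [rewrite e0; reflexivity| |intros s hs; apply (bd s hs k hk)].
        intros s hs. split; [apply Yd|apply Zd]; auto; lra.
      + apply (abs_sub_le_of_derive_sub_bound T _ _ (fun s => snd (Y k s)) (fun s => snd (Z k s))
                 (fun s => snd (G1 (fun j => Y j s) k)) (fun s => snd (G2 (fun j => Z j s) k)));
          auto; [rewrite e0; reflexivity| |intros s hs; apply (bd s hs k hk)].
        intros s hs. split; [apply Yd|apply Zd]; auto; lra. }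
  destruct (R1 i hi). split; nra.
Qed.

(** * The rescaled vortex field *)

Lemma inv_sq_abs_le (u1 u2 m : R) : 0 < m -> m ^ 2 <= u1 ^ 2 + u2 ^ 2 ->
  Rabs (u1 / (u1 ^ 2 + u2 ^ 2)) <= 1 / m.
Proof.
  intros hm hA. set (A := u1 ^ 2 + u2 ^ 2) in *.
  assert (hA0 : 0 < A) by nra.
  apply Rabs_le_of_sqr_le. { apply Rlt_le, Rdiv_lt_0_compat; lra. }
  set (w := u1 / A). assert (hw : u1 = w * A) by (unfold w; field; lra).
  assert (hu : u1 ^ 2 <= A) by (unfold A; nra).
  rewrite hw in hu.
  assert (w * w * A <= 1).
  { assert (w * w * A * A <= 1 * A) by nra. nra. }
  assert (1 / m * (1 / m) * m ^ 2 = 1) by (field; lra).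
  nra.
Qed.

(* |u/|u|^2 - v/|v|^2| = |u - v| / (|u| |v|). *)
Lemma inv_sq_lipschitz (u1 u2 v1 v2 m eta : R) : 0 < m ->
  m ^ 2 <= u1 ^ 2 + u2 ^ 2 -> m ^ 2 <= v1 ^ 2 + v2 ^ 2 ->
  Rabs (u1 - v1) <= 2 * eta -> Rabs (u2 - v2) <= 2 * eta ->
  Rabs (u1 / (u1 ^ 2 + u2 ^ 2) - v1 / (v1 ^ 2 + v2 ^ 2)) <= 3 * eta / m ^ 2 /\
  Rabs (u2 / (u1 ^ 2 + u2 ^ 2) - v2 / (v1 ^ 2 + v2 ^ 2)) <= 3 * eta / m ^ 2.
Proof.
  intros hm hu hv h1 h2.
  assert (E : (u1 / (u1 ^ 2 + u2 ^ 2) - v1 / (v1 ^ 2 + v2 ^ 2)) ^ 2 +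
              (u2 / (u1 ^ 2 + u2 ^ 2) - v2 / (v1 ^ 2 + v2 ^ 2)) ^ 2 =
              ((u1 - v1) ^ 2 + (u2 - v2) ^ 2) / ((u1 ^ 2 + u2 ^ 2) * (v1 ^ 2 + v2 ^ 2)))
    by (field; split; nra).
  set (A := u1 ^ 2 + u2 ^ 2) in *. set (B := v1 ^ 2 + v2 ^ 2) in *.
  set (w1 := u1 / A - v1 / B) in *. set (w2 := u2 / A - v2 / B) in *.
  assert (he : 0 <= eta) by (pose proof (Rabs_pos (u1 - v1)); lra).
  assert (s1 : (u1 - v1) ^ 2 <= 4 * eta ^ 2).
  { rewrite <- (pow2_abs (u1 - v1)). pose proof (Rabs_pos (u1 - v1)). nra. }
  assert (s2 : (u2 - v2) ^ 2 <= 4 * eta ^ 2).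
  { rewrite <- (pow2_abs (u2 - v2)). pose proof (Rabs_pos (u2 - v2)). nra. }
  assert (hm2 : 0 < m ^ 2) by (apply pow_lt; lra).
  assert (hm4 : m ^ 2 * m ^ 2 <= A * B) by (apply Rmult_le_compat; lra).
  assert (key : w1 ^ 2 + w2 ^ 2 <= 8 * eta ^ 2 / (m ^ 2 * m ^ 2)).
  { rewrite E. apply Rle_trans with (8 * eta ^ 2 / (A * B)).
    - unfold Rdiv. apply Rmult_le_compat_r; [apply Rlt_le, Rinv_0_lt_compat; nra|lra].
    - unfold Rdiv. apply Rmult_le_compat_l; [nra|]. apply Rinv_le_contravar; nra. }
  assert (e9 : 8 * eta ^ 2 / (m ^ 2 * m ^ 2) <= (3 * eta / m ^ 2) * (3 * eta / m ^ 2)).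
  { replace ((3 * eta / m ^ 2) * (3 * eta / m ^ 2)) with (9 * eta ^ 2 / (m ^ 2 * m ^ 2))
      by (field; lra).
    unfold Rdiv. apply Rmult_le_compat_r; [apply Rlt_le, Rinv_0_lt_compat; nra|nra]. }
  assert (p : 0 <= 3 * eta / m ^ 2) by (apply Rdiv_le_0_compat; lra).
  split; apply Rabs_le_of_sqr_le; auto; nra.
Qed.

Lemma sqr_le_of_abs_le (u1 u2 m : R) : 0 <= m -> m <= Rabs u2 -> m ^ 2 <= u1 ^ 2 + u2 ^ 2.
Proof.
  intros hm h. rewrite <- (pow2_abs u2).
  assert (m ^ 2 <= Rabs u2 ^ 2) by (apply pow_incr; lra). nra.
Qed.

Definition kernel_z (Y : nat -> R * R) (i j : nat) : R :=
  - (snd (Y i) - snd (Y j)) / sqnorm (fst (Y i) - fst (Y j), snd (Y i) - snd (Y j)).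

Definition kernel_r (Y : nat -> R * R) (i j : nat) : R :=
  (fst (Y i) - fst (Y j)) / sqnorm (fst (Y i) - fst (Y j), snd (Y i) - snd (Y j)).

Section Kernel.

Variables (N : nat) (Y0 : nat -> R * R) (rho m : R).
Hypothesis m_pos : 0 < m.

Lemma radial_gap_in_box (Y : nat -> R * R) (i j : nat) : in_box N Y0 rho Y ->
  (i < N)%nat -> (j < N)%nat -> m + 2 * rho <= Rabs (snd (Y0 i) - snd (Y0 j)) ->
  m <= Rabs (snd (Y i) - snd (Y j)).
Proof.
  intros hK hi hj hg. destruct (hK i hi) as [_ a]. destruct (hK j hj) as [_ b].
  revert a b hg. split_Rabs; lra.
Qed.

Lemma kernel_bound (Y : nat -> R * R) (i j : nat) : in_box N Y0 rho Y ->
  (i < N)%nat -> (j < N)%nat -> m + 2 * rho <= Rabs (snd (Y0 i) - snd (Y0 j)) ->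
  Rabs (kernel_z Y i j) <= 1 / m /\ Rabs (kernel_r Y i j) <= 1 / m.
Proof.
  intros hK hi hj hg. pose proof (radial_gap_in_box Y i j hK hi hj hg) as g.
  unfold kernel_z, kernel_r, sqnorm; cbn [fst snd].
  set (u1 := fst (Y i) - fst (Y j)) in *. set (u2 := snd (Y i) - snd (Y j)) in *.
  pose proof (sqr_le_of_abs_le u1 u2 m ltac:(lra) g) as hs.
  split.
  - replace (- u2 / (u1 ^ 2 + u2 ^ 2)) with (- (u2 / (u2 ^ 2 + u1 ^ 2)))
      by (rewrite (Rplus_comm (u1 ^ 2)); unfold Rdiv; ring).
    rewrite Rabs_Ropp. apply inv_sq_abs_le; auto. lra.
  - apply inv_sq_abs_le; auto.
Qed.

Lemma kernel_lipschitz (Y Z : nat -> R * R) (eta : R) (i j : nat) :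
  in_box N Y0 rho Y -> in_box N Y0 rho Z -> close_config N eta Y Z ->
  (i < N)%nat -> (j < N)%nat -> m + 2 * rho <= Rabs (snd (Y0 i) - snd (Y0 j)) ->
  Rabs (kernel_z Y i j - kernel_z Z i j) <= 3 * eta / m ^ 2 /\
  Rabs (kernel_r Y i j - kernel_r Z i j) <= 3 * eta / m ^ 2.
Proof.
  intros hY hZ hc hi hj hg.
  pose proof (radial_gap_in_box Y i j hY hi hj hg) as g1.
  pose proof (radial_gap_in_box Z i j hZ hi hj hg) as g2.
  destruct (hc i hi) as [c1 c2]. destruct (hc j hj) as [c3 c4].
  unfold kernel_z, kernel_r, sqnorm; cbn [fst snd].
  set (u1 := fst (Y i) - fst (Y j)) in *. set (u2 := snd (Y i) - snd (Y j)) in *.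
  set (v1 := fst (Z i) - fst (Z j)) in *. set (v2 := snd (Z i) - snd (Z j)) in *.
  assert (d1 : Rabs (u1 - v1) <= 2 * eta) by (unfold u1, v1; revert c1 c3; split_Rabs; lra).
  assert (d2 : Rabs (u2 - v2) <= 2 * eta) by (unfold u2, v2; revert c2 c4; split_Rabs; lra).
  destruct (inv_sq_lipschitz u1 u2 v1 v2 m eta m_pos (sqr_le_of_abs_le u1 u2 m ltac:(lra) g1)
              (sqr_le_of_abs_le v1 v2 m ltac:(lra) g2) d1 d2) as [l1 l2].
  split; auto.
  replace (- u2 / (u1 ^ 2 + u2 ^ 2) - - v2 / (v1 ^ 2 + v2 ^ 2))
    with (- (u2 / (u1 ^ 2 + u2 ^ 2) - v2 / (v1 ^ 2 + v2 ^ 2))) by (unfold Rdiv; ring).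
  rewrite Rabs_Ropp; auto.
Qed.

End Kernel.

(* [gamma / (4 pi (rs + dl y)) = gamma / (4 pi rs) - dl * gamma / (4 pi) * radial_drift rs dl y]:
   the first term is the common translation speed, the second survives the rescaling. *)
Definition radial_drift (rs dl y : R) : R := y / (rs * (rs + dl * y)).

(* The vortex field in the variables [Y = (X - (zs, rs) - v t e_z) / dl], [dl = 1 / sqrt|ln eps|]. *)
Definition rescaled_field (N : nat) (gamma rs dl : R) (Y : nat -> R * R) (i : nat) : R * R :=
  ( gamma / (2 * PI) * sum_ne N i (fun j => kernel_z Y i j)
      - gamma / (4 * PI) * radial_drift rs dl (snd (Y i)),
    gamma / (2 * PI) * sum_ne N i (fun j => kernel_r Y i j) ).

Lemma Rabs_affine2_le (a b x y : R) : 0 <= a -> 0 <= b ->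
  Rabs (a * x - b * y) <= a * Rabs x + b * Rabs y.
Proof.
  intros ha hb. eapply Rle_trans; [apply Rabs_triang|].
  rewrite Rabs_Ropp, !Rabs_mult, (Rabs_pos_eq a), (Rabs_pos_eq b) by auto. lra.
Qed.

Lemma Rabs_sub_affine2_le (a b x x' y y' : R) : 0 <= a -> 0 <= b ->
  Rabs ((a * x - b * y) - (a * x' - b * y')) <= a * Rabs (x - x') + b * Rabs (y - y').
Proof.
  intros ha hb.
  replace ((a * x - b * y) - (a * x' - b * y')) with (a * (x - x') - b * (y - y')) by ring.
  apply Rabs_affine2_le; auto.
Qed.

Section RescaledField.

Variables (N : nat) (Y0 : nat -> R * R) (gamma rs m rho Rb : R).
Hypotheses (gamma_pos : 0 < gamma) (rs_pos : 0 < rs) (m_pos : 0 < m) (rho_ge0 : 0 <= rho).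
Hypothesis radial_gap : forall i j, (i < N)%nat -> (j < N)%nat -> i <> j ->
  m + 2 * rho <= Rabs (snd (Y0 i) - snd (Y0 j)).
Hypothesis radial_bound : forall i, (i < N)%nat -> Rabs (snd (Y0 i)) + rho <= Rb.
Variable dl : R.
Hypotheses (dl_ge0 : 0 <= dl) (dl_small : dl * Rb <= rs / 2).

Definition field_bound : R :=
  gamma / (2 * PI) * (INR N * (1 / m)) + gamma / (4 * PI) * (Rb / (rs * (rs / 2))).
Definition field_lipschitz : R :=
  gamma / (2 * PI) * (INR N * (3 / m ^ 2)) + gamma / (4 * PI) * (1 / ((rs / 2) * (rs / 2))).
Definition field_delta : R := gamma / (4 * PI) * (Rb * Rb / (rs * rs * (rs / 2))).

Lemma gamma_div_pos : 0 < gamma / (2 * PI) /\ 0 < gamma / (4 * PI).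
Proof. pose proof PI_RGT_0. split; apply Rdiv_lt_0_compat; lra. Qed.

Lemma radial_bound_in_box (Y : nat -> R * R) (i : nat) : in_box N Y0 rho Y -> (i < N)%nat ->
  - Rb <= snd (Y i) <= Rb.
Proof.
  intros hK hi. destruct (hK i hi) as [_ a]. specialize (radial_bound i hi).
  revert a radial_bound. split_Rabs; lra.
Qed.

Lemma radial_drift_bound (y : R) : - Rb <= y <= Rb ->
  Rabs (radial_drift rs dl y) <= Rb / (rs * (rs / 2)).
Proof.
  intros hy. unfold radial_drift. apply Rabs_div_le; [|revert hy; split_Rabs; lra].
  assert (dl * y >= - (rs / 2)) by nra.
  split; [nra|]. apply Rmult_le_compat_l; lra.
Qed.

Lemma radial_drift_lipschitz (y y' eta : R) : - Rb <= y <= Rb -> - Rb <= y' <= Rb ->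
  Rabs (y - y') <= eta ->
  Rabs (radial_drift rs dl y - radial_drift rs dl y') <= eta / ((rs / 2) * (rs / 2)).
Proof.
  intros hy hy' he. unfold radial_drift.
  assert (h1 : dl * y >= - (rs / 2)) by nra.
  assert (h2 : dl * y' >= - (rs / 2)) by nra.
  replace (y / (rs * (rs + dl * y)) - y' / (rs * (rs + dl * y')))
    with ((y - y') / ((rs + dl * y) * (rs + dl * y'))) by (field; lra).
  apply Rabs_div_le; auto. split; [nra|]. apply Rmult_le_compat; lra.
Qed.

Lemma radial_drift_delta (y : R) : - Rb <= y <= Rb ->
  Rabs (radial_drift rs dl y - radial_drift rs 0 y) <= dl * (Rb * Rb / (rs * rs * (rs / 2))).
Proof.
  intros hy. unfold radial_drift.
  assert (h1 : dl * y >= - (rs / 2)) by nra.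
  replace (y / (rs * (rs + dl * y)) - y / (rs * (rs + 0 * y)))
    with ((- (dl * y * y)) / (rs * rs * (rs + dl * y))) by (field; lra).
  replace (dl * (Rb * Rb / (rs * rs * (rs / 2)))) with (dl * Rb * Rb / (rs * rs * (rs / 2)))
    by (field; lra).
  apply Rabs_div_le.
  - split; [apply Rmult_lt_0_compat; [apply Rmult_lt_0_compat|]; lra|].
    apply Rmult_le_compat_l; [apply Rlt_le, Rmult_lt_0_compat; lra|lra].
  - rewrite Rabs_Ropp, !Rabs_mult, (Rabs_right dl) by lra.
    assert (Rabs y <= Rb) by (revert hy; split_Rabs; lra).
    pose proof (Rabs_pos y). apply Rmult_le_compat; [nra|lra|nra|lra].
Qed.

Lemma rescaled_field_bound (Y : nat -> R * R) : in_box N Y0 rho Y -> forall i, (i < N)%nat ->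
  Rabs (fst (rescaled_field N gamma rs dl Y i)) <= field_bound /\
  Rabs (snd (rescaled_field N gamma rs dl Y i)) <= field_bound.
Proof.
  intros hY i hi. destruct gamma_div_pos as [g2 g4]. pose proof (pos_INR N) as hN.
  assert (hm1 : 0 <= 1 / m) by (apply Rlt_le, Rdiv_lt_0_compat; lra).
  assert (S1 : Rabs (sum_ne N i (fun j => kernel_z Y i j)) <= INR N * (1 / m)).
  { apply sum_ne_abs_le; auto. intros j hj hne. apply (kernel_bound N Y0 rho m); auto. }
  assert (S2 : Rabs (sum_ne N i (fun j => kernel_r Y i j)) <= INR N * (1 / m)).
  { apply sum_ne_abs_le; auto. intros j hj hne. apply (kernel_bound N Y0 rho m); auto. }
  pose proof (radial_drift_bound _ (radial_bound_in_box Y i hY hi)) as H3.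
  assert (0 <= Rb / (rs * (rs / 2))) by (pose proof (Rabs_pos (radial_drift rs dl (snd (Y i)))); lra).
  unfold rescaled_field, field_bound; cbn [fst snd]. split.
  - eapply Rle_trans; [apply Rabs_affine2_le; lra|].
    apply Rplus_le_compat; apply Rmult_le_compat_l; lra.
  - rewrite Rabs_mult, Rabs_right by lra.
    assert (0 <= gamma / (4 * PI) * (Rb / (rs * (rs / 2)))) by (apply Rmult_le_pos; lra).
    assert (gamma / (2 * PI) * Rabs (sum_ne N i (fun j => kernel_r Y i j))
            <= gamma / (2 * PI) * (INR N * (1 / m))) by (apply Rmult_le_compat_l; lra).
    lra.
Qed.

Lemma rescaled_field_lipschitz (Y Z : nat -> R * R) (eta : R) :
  in_box N Y0 rho Y -> in_box N Y0 rho Z -> close_config N eta Y Z ->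
  close_config N (field_lipschitz * eta)
    (rescaled_field N gamma rs dl Y) (rescaled_field N gamma rs dl Z).
Proof.
  intros hY hZ hc i hi. destruct gamma_div_pos as [g2 g4]. pose proof (pos_INR N) as hN.
  assert (he : 0 <= eta).
  { destruct (hc i hi) as [a _]. pose proof (Rabs_pos (fst (Y i) - fst (Z i))). lra. }
  assert (hm2 : 0 < m ^ 2) by (apply pow_lt; lra).
  assert (c0 : 0 <= 3 * eta / m ^ 2) by (apply Rdiv_le_0_compat; lra).
  assert (S1 : Rabs (sum_ne N i (fun j => kernel_z Y i j) - sum_ne N i (fun j => kernel_z Z i j))
               <= INR N * (3 * eta / m ^ 2)).
  { apply sum_ne_minus_abs_le; auto. intros j hj hne. apply (kernel_lipschitz N Y0 rho m); auto. }
  assert (S2 : Rabs (sum_ne N i (fun j => kernel_r Y i j) - sum_ne N i (fun j => kernel_r Z i j))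
               <= INR N * (3 * eta / m ^ 2)).
  { apply sum_ne_minus_abs_le; auto. intros j hj hne. apply (kernel_lipschitz N Y0 rho m); auto. }
  assert (H3 : Rabs (radial_drift rs dl (snd (Y i)) - radial_drift rs dl (snd (Z i)))
               <= eta / ((rs / 2) * (rs / 2))).
  { apply radial_drift_lipschitz; try apply radial_bound_in_box; auto. destruct (hc i hi); auto. }
  assert (p3 : 0 <= eta / ((rs / 2) * (rs / 2))) by (apply Rdiv_le_0_compat; nra).
  assert (EL : field_lipschitz * eta = gamma / (2 * PI) * (INR N * (3 * eta / m ^ 2))
                                       + gamma / (4 * PI) * (eta / ((rs / 2) * (rs / 2)))).
  { unfold field_lipschitz. field. pose proof PI_RGT_0. lra. }
  assert (0 <= INR N * (3 * eta / m ^ 2)) by (apply Rmult_le_pos; lra).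
  unfold rescaled_field; cbn [fst snd]. rewrite EL. split.
  - eapply Rle_trans; [apply Rabs_sub_affine2_le; lra|].
    apply Rplus_le_compat; apply Rmult_le_compat_l; lra.
  - rewrite <- Rmult_minus_distr_l, Rabs_mult, Rabs_right by lra.
    assert (0 <= gamma / (4 * PI) * (eta / (rs / 2 * (rs / 2)))) by (apply Rmult_le_pos; lra).
    assert (gamma / (2 * PI) *
              Rabs (sum_ne N i (fun j => kernel_r Y i j) - sum_ne N i (fun j => kernel_r Z i j))
            <= gamma / (2 * PI) * (INR N * (3 * eta / m ^ 2))) by (apply Rmult_le_compat_l; lra).
    lra.
Qed.

Lemma rescaled_field_bounded_lipschitz :
  bounded_lipschitz_on_box N Y0 rho field_bound field_lipschitz (rescaled_field N gamma rs dl).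
Proof. split; [apply rescaled_field_bound|apply rescaled_field_lipschitz]. Qed.

Lemma rescaled_field_delta (Y : nat -> R * R) : in_box N Y0 rho Y ->
  close_config N (field_delta * dl) (rescaled_field N gamma rs dl Y) (rescaled_field N gamma rs 0 Y).
Proof.
  intros hY i hi. destruct gamma_div_pos as [g2 g4].
  pose proof (radial_drift_delta _ (radial_bound_in_box Y i hY hi)) as H3.
  assert (p : 0 <= dl * (Rb * Rb / (rs * rs * (rs / 2)))).
  { pose proof (Rabs_pos (radial_drift rs dl (snd (Y i)) - radial_drift rs 0 (snd (Y i)))). lra. }
  unfold rescaled_field, field_delta; cbn [fst snd]. split.
  - eapply Rle_trans; [apply Rabs_sub_affine2_le; lra|].
    rewrite Rminus_diag, Rabs_R0, Rmult_0_r, Rplus_0_l.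
    replace (gamma / (4 * PI) * (Rb * Rb / (rs * rs * (rs / 2))) * dl)
      with (gamma / (4 * PI) * (dl * (Rb * Rb / (rs * rs * (rs / 2))))) by ring.
    apply Rmult_le_compat_l; lra.
  - rewrite Rminus_diag, Rabs_R0. rewrite Rmult_assoc, (Rmult_comm _ dl). apply Rmult_le_pos; lra.
Qed.

End RescaledField.

Lemma fold_right_Rmin_spec (x : R) (l : list R) :
  In (fold_right Rmin x l) (x :: l) /\ forall y, In y (x :: l) -> fold_right Rmin x l <= y.
Proof.
  induction l as [|a l [IH1 IH2]]; simpl.
  - split; [auto|]. intros y [<-|[]]; lra.
  - split.
    + destruct (Rle_dec a (fold_right Rmin x l)).
      * rewrite Rmin_left by auto. simpl; auto.
      * rewrite Rmin_right by lra. simpl in IH1 |- *. tauto.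
    + intros y [<-|[<-|h2]].
      * eapply Rle_trans; [apply Rmin_r|]. apply IH2; simpl; auto.
      * apply Rmin_l.
      * eapply Rle_trans; [apply Rmin_r|]. apply IH2; simpl; auto.
Qed.

Lemma d0_spec (N : nat) (Y0 : nat -> R * R) : (2 <= N)%nat ->
  (forall j k, (j < N)%nat -> (k < N)%nat -> j <> k -> snd (Y0 j) <> snd (Y0 k)) ->
  0 < d0 N Y0 /\
  forall i j, (i < N)%nat -> (j < N)%nat -> i <> j -> 4 * d0 N Y0 <= Rabs (snd (Y0 i) - snd (Y0 j)).
Proof.
  intros hN hd.
  set (l := flat_map (fun j => flat_map (fun k => if Nat.eqb j k then nil
                          else Rabs (snd (Y0 j) - snd (Y0 k)) :: nil) (seq 0 N)) (seq 0 N)).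
  assert (Hin : forall y, In y l <-> exists j k, (j < N)%nat /\ (k < N)%nat /\ j <> k /\
                                         y = Rabs (snd (Y0 j) - snd (Y0 k))).
  { intros y. unfold l. rewrite in_flat_map. split.
    - intros [j [hj hy]]. rewrite in_flat_map in hy. destruct hy as [k [hk hy]].
      apply in_seq in hj. apply in_seq in hk.
      destruct (Nat.eqb_spec j k); [destruct hy|]. destruct hy as [<-|[]].
      exists j, k. repeat split; lia.
    - intros [j [k [hj [hk [hjk ->]]]]]. exists j. split; [apply in_seq; lia|].
      rewrite in_flat_map. exists k. split; [apply in_seq; lia|].
      destruct (Nat.eqb_spec j k); [lia|]. left; auto. }
  assert (Hne : In (Rabs (snd (Y0 0%nat) - snd (Y0 1%nat))) l)
    by (apply Hin; exists 0%nat, 1%nat; repeat split; lia).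
  destruct l as [|x t] eqn:El; [destruct Hne|].
  assert (D : d0 N Y0 = / 4 * fold_right Rmin x t) by (unfold d0; fold l; rewrite El; reflexivity).
  destruct (fold_right_Rmin_spec x t) as [m1 m2].
  split.
  - rewrite D. apply Rmult_lt_0_compat; [lra|].
    apply Hin in m1. destruct m1 as [j [k [hj [hk [hjk e]]]]].
    rewrite e. apply Rabs_pos_lt. specialize (hd j k hj hk hjk). lra.
  - intros i j hi hj hij. rewrite D.
    assert (fold_right Rmin x t <= Rabs (snd (Y0 i) - snd (Y0 j)))
      by (apply m2, Hin; exists i, j; auto).
    lra.
Qed.

Lemma exists_config_bound (N : nat) (Y0 : nat -> R * R) (rho : R) : 0 < rho ->
  exists Rb, 0 < Rb /\ forall i, (i < N)%nat ->
    Rabs (fst (Y0 i)) + rho <= Rb /\ Rabs (snd (Y0 i)) + rho <= Rb.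
Proof.
  intros hrho. induction N as [|N [Rb [hRb HRb]]].
  - exists rho. split; [lra|]. intros; lia.
  - set (b := Rabs (fst (Y0 N)) + Rabs (snd (Y0 N)) + rho).
    exists (Rmax Rb b). split; [eapply Rlt_le_trans; [exact hRb|apply Rmax_l]|].
    intros i hi. pose proof (Rmax_l Rb b). pose proof (Rmax_r Rb b).
    destruct (Nat.eq_dec i N) as [->|hne].
    + unfold b in *. pose proof (Rabs_pos (fst (Y0 N))). pose proof (Rabs_pos (snd (Y0 N))). lra.
    + destruct (HRb i ltac:(lia)). lra.
Qed.

Lemma exists_small_time (M L v rho h : R) : 0 <= M -> 0 <= L -> 0 <= v -> 0 < rho -> 0 < h ->
  exists T, 0 < T /\ M * T < rho /\ L * T <= 1 / 2 /\ v * T <= h.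
Proof.
  intros hM hL hv hrho hh.
  assert (key : forall a b T, 0 <= a -> 0 < b -> T <= b / (a + 1) -> a * T < b).
  { intros a b T ha hb hT. apply Rle_lt_trans with (a * (b / (a + 1))); [apply Rmult_le_compat_l; lra|].
    apply (Rmult_lt_reg_r (a + 1)); [lra|].
    replace (a * (b / (a + 1)) * (a + 1)) with (a * b) by (field; lra). nra. }
  set (T := Rmin (Rmin (rho / (M + 1)) (1 / 2 / (L + 1))) (h / (v + 1))).
  assert (h1 : T <= rho / (M + 1)) by (unfold T; eapply Rle_trans; apply Rmin_l).
  assert (h2 : T <= 1 / 2 / (L + 1)) by (unfold T; eapply Rle_trans; [apply Rmin_l|apply Rmin_r]).
  assert (h3 : T <= h / (v + 1)) by apply Rmin_r.
  exists T. split; [unfold T; repeat apply Rmin_pos; apply Rdiv_lt_0_compat; lra|].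
  split; [|split]; [| apply Rlt_le | apply Rlt_le]; apply key; auto; lra.
Qed.

Lemma lnabs_large (dl0 eps : R) : 0 < dl0 -> 0 < eps <= exp (- (1 / (dl0 * dl0))) -> eps < 1 ->
  0 < lnabs eps /\ 1 / sqrt (lnabs eps) <= dl0.
Proof.
  intros hdl0 heps heps1. unfold lnabs.
  assert (ln eps < 0) by (rewrite <- ln_1; apply ln_increasing; lra).
  assert (ln eps <= - (1 / (dl0 * dl0))).
  { rewrite <- (ln_exp (- (1 / (dl0 * dl0)))). apply ln_le; lra. }
  rewrite Rabs_left by lra. split; [lra|].
  assert (hs : 1 / dl0 <= sqrt (- ln eps)).
  { rewrite <- (sqrt_pow2 (1 / dl0)) by (apply Rlt_le, Rdiv_lt_0_compat; lra).
    apply sqrt_le_1_alt. replace ((1 / dl0) ^ 2) with (1 / (dl0 * dl0)) by (field; lra). lra. }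
  assert (0 < 1 / dl0) by (apply Rdiv_lt_0_compat; lra).
  replace dl0 with (1 / (1 / dl0)) by (field; lra).
  unfold Rdiv. rewrite !Rmult_1_l. apply Rinv_le_contravar; lra.
Qed.

(** * Undoing the scaling *)

Definition unscale (zs rs v s t : R) (y : R * R) : R * R := (zs + v * t + fst y / s, rs + snd y / s).
Definition rescale (zs rs v s t : R) (x : R * R) : R * R :=
  (s * (fst x - zs - v * t), s * (snd x - rs)).

Lemma unscale_rescale (zs rs v s t : R) (x : R * R) :
  0 < s -> unscale zs rs v s t (rescale zs rs v s t x) = x.
Proof. intros hs. destruct x as [a b]. unfold unscale, rescale; cbn [fst snd]. f_equal; field; lra. Qed.

Lemma F_Y_eq_rescaled_field (N : nat) (gamma rs : R) :
  0 < rs -> F_Y N gamma rs = rescaled_field N gamma rs 0.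
Proof.
  intros hrs. apply functional_extensionality; intros Y; apply functional_extensionality; intros i.
  unfold F_Y, rescaled_field, radial_drift, kernel_z, kernel_r. f_equal. f_equal.
  pose proof PI_RGT_0. field. lra.
Qed.

Lemma sqnorm_sub_neq0 (a b : R * R) : a <> b -> sqnorm (fst a - fst b, snd a - snd b) <> 0.
Proof.
  intros hne h. apply hne. unfold sqnorm in h; cbn [fst snd] in h.
  rewrite <- !Rsqr_pow2 in h. apply Rplus_sqr_eq_0 in h. destruct h as [h1 h2].
  rewrite (surjective_pairing a), (surjective_pairing b). f_equal; lra.
Qed.

Lemma kernels_unscale (zs rs v s t : R) (Y : nat -> R * R) (i j : nat) : s <> 0 -> Y i <> Y j ->
  kernel_z (fun k => unscale zs rs v s t (Y k)) i j = s * kernel_z Y i j /\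
  kernel_r (fun k => unscale zs rs v s t (Y k)) i j = s * kernel_r Y i j.
Proof.
  intros hs hne. pose proof (sqnorm_sub_neq0 _ _ hne) as hq. revert hq.
  unfold kernel_z, kernel_r, unscale, sqnorm. generalize (Y i) (Y j).
  intros [a1 a2] [b1 b2] hq; cbn [fst snd] in *.
  assert (E : (zs + v * t + a1 / s - (zs + v * t + b1 / s)) ^ 2 + (rs + a2 / s - (rs + b2 / s)) ^ 2
              = ((a1 - b1) ^ 2 + (a2 - b2) ^ 2) / (s * s)) by (field; auto).
  rewrite E. split; field; auto.
Qed.

Lemma F_X_kernels (N : nat) (gamma eps : R) (X : nat -> R * R) (i : nat) :
  F_X N gamma eps X i =
  (gamma / (4 * PI * snd (X i)) + gamma / (2 * PI * lnabs eps) * sum_ne N i (fun j => kernel_z X i j),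
   gamma / (2 * PI * lnabs eps) * sum_ne N i (fun j => kernel_r X i j)).
Proof. reflexivity. Qed.

Lemma F_X_unscale (N : nat) (gamma eps zs rs s t : R) (Y : nat -> R * R) (i : nat) :
  0 < rs -> 0 < s -> lnabs eps = s * s -> rs + snd (Y i) / s <> 0 ->
  (forall j, (j < N)%nat -> j <> i -> Y i <> Y j) ->
  F_X N gamma eps (fun j => unscale zs rs (gamma / (4 * PI * rs)) s t (Y j)) i =
  (gamma / (4 * PI * rs) + fst (rescaled_field N gamma rs (1 / s) Y i) / s,
   snd (rescaled_field N gamma rs (1 / s) Y i) / s).
Proof.
  intros hrs hs hL hX Hq. rewrite F_X_kernels.
  set (X := fun j => unscale zs rs (gamma / (4 * PI * rs)) s t (Y j)).
  assert (hs0 : s <> 0) by lra.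
  rewrite (sum_ne_scal N i (fun j => kernel_z X i j) (fun j => kernel_z Y i j) s)
    by (intros j hj hji; exact (proj1 (kernels_unscale _ _ _ _ _ _ _ _ hs0 (Hq j hj hji)))).
  rewrite (sum_ne_scal N i (fun j => kernel_r X i j) (fun j => kernel_r Y i j) s)
    by (intros j hj hji; exact (proj2 (kernels_unscale _ _ _ _ _ _ _ _ hs0 (Hq j hj hji)))).
  unfold X, rescaled_field, radial_drift, unscale; cbn [fst snd]. rewrite hL.
  pose proof PI_RGT_0.
  assert (rs * s + snd (Y i) <> 0).
  { intro h; apply hX. replace (rs + snd (Y i) / s) with ((rs * s + snd (Y i)) / s) by (field; lra).
    rewrite h. unfold Rdiv; ring. }
  assert (rs + 1 / s * snd (Y i) <> 0) by (intro h; apply hX; rewrite <- h; field; lra).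
  f_equal; field; repeat split; lra.
Qed.

Lemma is_sol_weaken_ok (N : nat) (T : R) (ok ok' : (nat -> R * R) -> Prop)
    (G : (nat -> R * R) -> nat -> R * R) (x0 : nat -> R * R) (Y : nat -> R -> R * R) :
  is_sol N T ok G x0 Y -> (forall t, 0 <= t <= T -> ok' (fun j => Y j t)) -> is_sol N T ok' G x0 Y.
Proof. intros [H0 [_ H]] Hok. split; [|split]; auto. Qed.

Lemma rescale_unscale (zs rs v s t : R) (y : R * R) :
  0 < s -> rescale zs rs v s t (unscale zs rs v s t y) = y.
Proof. intros hs. destruct y as [a b]. unfold unscale, rescale; cbn [fst snd]. f_equal; field; lra. Qed.

Lemma rescale_is_sol (N : nat) (T gamma eps zs rs : R) (Y0 : nat -> R * R) (X : nat -> R -> R * R) :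
  0 < rs -> 0 < lnabs eps ->
  is_sol N T (ok_X N) (F_X N gamma eps) (X0eps zs rs eps Y0) X ->
  is_sol N T (fun _ => True) (rescaled_field N gamma rs (1 / sqrt (lnabs eps))) Y0
    (fun i t => rescale zs rs (gamma / (4 * PI * rs)) (sqrt (lnabs eps)) t (X i t)).
Proof.
  intros hrs hL [H0 [Hok [Hc Hd]]].
  set (s := sqrt (lnabs eps)). set (v := gamma / (4 * PI * rs)).
  assert (hs : 0 < s) by (apply sqrt_lt_R0; auto).
  assert (hss : lnabs eps = s * s) by (unfold s; rewrite sqrt_sqrt; lra).
  split; [|split; [|split]].
  - intros i hi. unfold rescale. rewrite (H0 i hi). unfold X0eps; cbn [fst snd]. fold s.
    destruct (Y0 i) as [a b]; cbn [fst snd]. f_equal; field; lra.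
  - auto.
  - intros i hi. destruct (Hc i hi) as [c1 c2]. unfold rescale; cbn [fst snd]. split.
    + apply (cont_on_ext _ (fun u => - (s * zs) + (- (s * v)) * u + s * fst (X i u))); [intros; ring|].
      apply cont_on_affine; auto.
    + apply (cont_on_ext _ (fun u => - (s * rs) + 0 * u + s * snd (X i u))); [intros; ring|].
      apply cont_on_affine; auto.
  - intros i hi t ht.
    destruct (Hok t ltac:(lra)) as [Hnc Hpos].
    set (Y := fun j => rescale zs rs v s t (X j t)).
    assert (EX : (fun j => X j t) = (fun j => unscale zs rs v s t (Y j))).
    { apply functional_extensionality. intros j. unfold Y. rewrite unscale_rescale; auto. }
    assert (Hq : forall j, (j < N)%nat -> j <> i -> Y i <> Y j).
    { intros j hj hji e. apply (Hnc i j hi hj (fun h => hji (eq_sym h))).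
      rewrite <- (unscale_rescale zs rs v s t (X i t)), <- (unscale_rescale zs rs v s t (X j t))
        by exact hs.
      change (rescale zs rs v s t (X i t)) with (Y i). change (rescale zs rs v s t (X j t)) with (Y j).
      rewrite e. reflexivity. }
    assert (hr : rs + snd (Y i) / s <> 0).
    { specialize (Hpos i hi). cbv beta in Hpos. unfold Y, rescale; cbn [snd].
      replace (rs + s * (snd (X i t) - rs) / s) with (snd (X i t)) by (field; lra). lra. }
    pose proof (F_X_unscale N gamma eps zs rs s t Y i hrs hs hss hr Hq) as FE.
    fold v in FE. rewrite <- EX in FE.
    destruct (Hd i hi t ht) as [d1 d2]. rewrite FE in d1, d2. cbn [fst snd] in d1, d2.
    change (fun j => rescale zs rs v s t (X j t)) with Y.
    set (g := rescaled_field N gamma rs (1 / s) Y i).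
    split.
    + replace (fst g) with (- (s * v) + s * (v + fst g / s)) by (field; lra).
      apply (is_derive_affine (fun u => fst (X i u))) with (p := - (s * zs)); auto.
      intros u. unfold rescale; cbn [fst]. ring.
    + replace (snd g) with (0 + s * (snd g / s)) by (field; lra).
      apply (is_derive_affine (fun u => snd (X i u))) with (p := - (s * rs)); auto.
      intros u. unfold rescale; cbn [snd]. ring.
Qed.

Lemma unscale_is_sol (N : nat) (T gamma eps zs rs : R) (Y0 : nat -> R * R) (Y : nat -> R -> R * R) :
  0 < rs -> 0 < lnabs eps ->
  is_sol N T (fun _ => True) (rescaled_field N gamma rs (1 / sqrt (lnabs eps))) Y0 Y ->
  (forall t, 0 <= t <= T -> no_collision N (fun j => Y j t)) ->
  (forall t, 0 <= t <= T -> forall i, (i < N)%nat -> 0 < rs + snd (Y i t) / sqrt (lnabs eps)) ->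
  is_sol N T (ok_X N) (F_X N gamma eps) (X0eps zs rs eps Y0)
    (fun i t => unscale zs rs (gamma / (4 * PI * rs)) (sqrt (lnabs eps)) t (Y i t)).
Proof.
  intros hrs hL [H0 [_ [Hc Hd]]] Hnc Hpos.
  set (s := sqrt (lnabs eps)) in *. set (v := gamma / (4 * PI * rs)).
  assert (hs : 0 < s) by (apply sqrt_lt_R0; auto).
  assert (hss : lnabs eps = s * s) by (unfold s; rewrite sqrt_sqrt; lra).
  split; [|split; [|split]].
  - intros i hi. unfold unscale, X0eps. rewrite (H0 i hi). fold s. f_equal. ring.
  - intros t ht. split.
    + intros i j hi hj hij e. apply (Hnc t ht i j hi hj hij). cbv beta in e |- *.
      rewrite <- (rescale_unscale zs rs v s t (Y i t)), <- (rescale_unscale zs rs v s t (Y j t)), e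
        by exact hs.
      reflexivity.
    + intros i hi. apply Hpos; auto.
  - intros i hi. destruct (Hc i hi) as [c1 c2]. unfold unscale; cbn [fst snd]. split.
    + apply (cont_on_ext _ (fun u => zs + v * u + (1 / s) * fst (Y i u))); [intros; unfold Rdiv; ring|].
      apply cont_on_affine; auto.
    + apply (cont_on_ext _ (fun u => rs + 0 * u + (1 / s) * snd (Y i u))); [intros; unfold Rdiv; ring|].
      apply cont_on_affine; auto.
  - intros i hi t ht.
    assert (Hq : forall j, (j < N)%nat -> j <> i -> Y i t <> Y j t).
    { intros j hj hji. apply (Hnc t ltac:(lra) i j hi hj (fun h => hji (eq_sym h))). }
    assert (hr : rs + snd (Y i t) / s <> 0) by (pose proof (Hpos t ltac:(lra) i hi); lra).
    pose proof (F_X_unscale N gamma eps zs rs s t (fun j => Y j t) i hrs hs hss hr Hq) as FE.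
    fold v in FE. cbv beta in FE. rewrite FE. cbn [fst snd].
    set (g := rescaled_field N gamma rs (1 / s) (fun j => Y j t) i).
    destruct (Hd i hi t ht) as [d1 d2]. unfold unscale; cbn [fst snd].
    split.
    + replace (v + fst g / s) with (v + 1 / s * fst g) by (field; lra).
      apply (is_derive_affine (fun u => fst (Y i u))) with (p := zs); auto.
      intros u. unfold Rdiv. ring.
    + replace (snd g / s) with (0 + 1 / s * snd g) by (field; lra).
      apply (is_derive_affine (fun u => snd (Y i u))) with (p := rs); auto.
      intros u. unfold Rdiv. ring.
Qed.

(** * Uniform estimates *)

Lemma field_constants_pos (N : nat) (gamma rs m Rb : R) : 0 < gamma -> 0 < rs -> 0 < m -> 0 < Rb ->
  0 <= field_bound N gamma rs m Rb /\ 0 <= field_lipschitz N gamma rs m /\ 0 < field_delta gamma rs Rb.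
Proof.
  intros hg hrs hm hRb. pose proof PI_RGT_0. pose proof (pos_INR N).
  assert (0 < gamma / (2 * PI)) by (apply Rdiv_lt_0_compat; lra).
  assert (0 < gamma / (4 * PI)) by (apply Rdiv_lt_0_compat; lra).
  assert (0 < m ^ 2) by (apply pow_lt; lra).
  unfold field_bound, field_lipschitz, field_delta. repeat split.
  - apply Rplus_le_le_0_compat; apply Rmult_le_pos; try lra;
      [apply Rmult_le_pos; [lra|]|]; apply Rdiv_le_0_compat; nra.
  - apply Rplus_le_le_0_compat; apply Rmult_le_pos; try lra;
      [apply Rmult_le_pos; [lra|]|]; apply Rdiv_le_0_compat; nra.
  - apply Rmult_lt_0_compat; [lra|]. apply Rdiv_lt_0_compat; [nra|].
    apply Rmult_lt_0_compat; [apply Rmult_lt_0_compat|]; lra.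
Qed.

Lemma dist2_le_sum_abs (a b c d : R) : dist2 (a, b) (c, d) <= Rabs (a - c) + Rabs (b - d).
Proof.
  unfold dist2; cbn [fst snd].
  pose proof (Rabs_pos (a - c)). pose proof (Rabs_pos (b - d)).
  rewrite <- (sqrt_pow2 (Rabs (a - c) + Rabs (b - d))) by lra.
  apply sqrt_le_1_alt. rewrite <- (pow2_abs (a - c)), <- (pow2_abs (b - d)). nra.
Qed.

Lemma dist2_unscale_le (zs rs v s t C : R) (y z : R * R) : 0 < s ->
  Rabs (fst y - fst z) <= C -> Rabs (snd y - snd z) <= C ->
  dist2 (unscale zs rs v s t y) (unscale zs rs v s t z) <= 2 * C / s.
Proof.
  intros hs h1 h2. unfold unscale. eapply Rle_trans; [apply dist2_le_sum_abs|].
  rewrite Rminus_plus_l_l, Rminus_plus_l_l.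
  replace (fst y / s - fst z / s) with ((fst y - fst z) / s) by (field; lra).
  replace (snd y / s - snd z / s) with ((snd y - snd z) / s) by (field; lra).
  pose proof (Rabs_div_pos_le _ _ s hs h1). pose proof (Rabs_div_pos_le _ _ s hs h2).
  replace (2 * C / s) with (C / s + C / s) by (field; lra). lra.
Qed.

Lemma unscale_in_A (zs rs v eps t rho h Rb : R) (y y0 : R * R) :
  0 < lnabs eps -> 0 <= v * t <= h / 2 -> Rb / sqrt (lnabs eps) <= h / 2 ->
  Rabs (fst y0) + rho <= Rb -> Rabs (fst y - fst y0) <= rho -> Rabs (snd y - snd y0) <= rho ->
  inA zs eps (rs + snd y0 / sqrt (lnabs eps)) rho h (unscale zs rs v (sqrt (lnabs eps)) t y).
Proof.
  intros hL hvt hRb hb h1 h2. set (s := sqrt (lnabs eps)) in *.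
  assert (hs : 0 < s) by (apply sqrt_lt_R0; auto).
  unfold inA, unscale; cbn [fst snd]. fold s. split.
  - rewrite Rminus_plus_l_l.
    replace (snd y / s - snd y0 / s) with ((snd y - snd y0) / s) by (field; lra).
    apply Rabs_div_pos_le; auto.
  - replace (zs + v * t + fst y / s - zs) with (v * t + fst y / s) by ring.
    eapply Rle_trans; [apply Rabs_triang|]. rewrite Rabs_right by lra.
    assert (Rabs (fst y) <= Rb) by (revert h1 hb; split_Rabs; lra).
    pose proof (Rabs_div_pos_le _ _ s hs H). lra.
Qed.

Section UniformEstimates.

Variables (N : nat) (Y0 : nat -> R * R) (gamma rs h0 rho Rb T dl0 : R).
Hypotheses (gamma_pos : 0 < gamma) (rs_pos : 0 < rs) (rho_pos : 0 < rho).
Hypotheses (Rb_pos : 0 < Rb) (T_pos : 0 < T).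
Hypothesis radial_gap : forall i j, (i < N)%nat -> (j < N)%nat -> i <> j ->
  4 * rho <= Rabs (snd (Y0 i) - snd (Y0 j)).
Hypothesis config_bound : forall i, (i < N)%nat ->
  Rabs (fst (Y0 i)) + rho <= Rb /\ Rabs (snd (Y0 i)) + rho <= Rb.
Hypothesis bound_time : field_bound N gamma rs (2 * rho) Rb * T < rho.
Hypothesis lipschitz_time : field_lipschitz N gamma rs (2 * rho) * T <= 1 / 2.
Hypothesis drift_time : gamma / (4 * PI * rs) * T <= h0 / 2.
Hypothesis dl0_small : dl0 * Rb <= Rmin rs h0 / 2.

Lemma rescaled_field_ok (dl : R) : 0 <= dl <= dl0 ->
  bounded_lipschitz_on_box N Y0 rho (field_bound N gamma rs (2 * rho) Rb)
    (field_lipschitz N gamma rs (2 * rho)) (rescaled_field N gamma rs dl).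
Proof.
  intros hdl. pose proof (Rmin_l rs h0).
  apply rescaled_field_bounded_lipschitz; try lra.
  - intros i j hi hj hij. specialize (radial_gap i j hi hj hij). lra.
  - intros i hi. apply config_bound; auto.
  - apply Rle_trans with (dl0 * Rb); [apply Rmult_le_compat_r|]; lra.
Qed.

Lemma rescaled_sol_exists (dl : R) : 0 <= dl <= dl0 ->
  exists Y, is_sol N T (fun _ => True) (rescaled_field N gamma rs dl) Y0 Y /\
            forall t, in_box N Y0 rho (fun j => Y j t).
Proof.
  intros hdl. destruct (field_constants_pos N gamma rs (2 * rho) Rb) as [hM [hL _]]; try lra.
  apply (picard_existence N Y0 rho (field_bound N gamma rs (2 * rho) Rb)
           (field_lipschitz N gamma rs (2 * rho))); auto; try lra.
  apply rescaled_field_ok; auto.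
Qed.

Lemma rescaled_sol_in_box (dl : R) (ok : (nat -> R * R) -> Prop) (Y : nat -> R -> R * R) :
  0 <= dl <= dl0 -> is_sol N T ok (rescaled_field N gamma rs dl) Y0 Y ->
  forall t, 0 <= t <= T -> in_box N Y0 rho (fun j => Y j t).
Proof.
  intros hdl HY t ht. destruct (field_constants_pos N gamma rs (2 * rho) Rb) as [hM _]; try lra.
  apply (close_config_le _ (field_bound N gamma rs (2 * rho) Rb * T)); [lra|].
  apply (is_sol_in_box N T ok (rescaled_field N gamma rs dl) Y0 rho _
           (field_lipschitz N gamma rs (2 * rho))); auto; try lra.
  apply rescaled_field_ok; auto.
Qed.

Lemma rescaled_sols_close (dl : R) (ok1 ok2 : (nat -> R * R) -> Prop) (Y Z : nat -> R -> R * R) :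
  0 < dl <= dl0 -> is_sol N T ok1 (rescaled_field N gamma rs dl) Y0 Y ->
  is_sol N T ok2 (rescaled_field N gamma rs 0) Y0 Z ->
  forall t, 0 <= t <= T ->
    close_config N (3 * (field_delta gamma rs Rb * dl) * T) (fun j => Y j t) (fun j => Z j t).
Proof.
  intros hdl HY HZ.
  destruct (field_constants_pos N gamma rs (2 * rho) Rb) as [_ [hL hD]]; try lra.
  pose proof (Rmin_l rs h0).
  apply (is_sol_close N T ok1 ok2 (rescaled_field N gamma rs dl) (rescaled_field N gamma rs 0)
           Y0 rho (field_bound N gamma rs (2 * rho) Rb)
           (field_lipschitz N gamma rs (2 * rho))); auto; try lra.
  - apply Rmult_lt_0_compat; [apply Rmult_lt_0_compat|]; lra.
  - apply rescaled_field_ok; lra.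
  - intros A hA. apply (rescaled_field_delta N Y0 gamma rs (2 * rho) rho); auto; try lra.
    + intros i j hi hj hij. specialize (radial_gap i j hi hj hij). lra.
    + intros i hi. apply config_bound; auto.
    + apply Rle_trans with (dl0 * Rb); [apply Rmult_le_compat_r|]; lra.
  - apply (rescaled_sol_in_box dl ok1); auto; lra.
  - apply (rescaled_sol_in_box 0 ok2); auto; lra.
Qed.

Lemma no_collision_in_box (Y : nat -> R * R) : in_box N Y0 rho Y -> no_collision N Y.
Proof.
  intros hY i j hi hj hij e.
  pose proof (radial_gap_in_box N Y0 rho (2 * rho) ltac:(lra) Y i j hY hi hj
                ltac:(specialize (radial_gap i j hi hj hij); lra)) as g.
  rewrite e, Rminus_diag, Rabs_R0 in g. lra.
Qed.

Lemma unscaled_radius_pos (s : R) (Y : nat -> R * R) (i : nat) : 0 < s -> 1 / s <= dl0 ->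
  in_box N Y0 rho Y -> (i < N)%nat -> 0 < rs + snd (Y i) / s.
Proof.
  intros hs hdl hY hi. destruct (hY i hi) as [_ h]. destruct (config_bound i hi) as [_ hb].
  assert (hy : - Rb <= snd (Y i)) by (revert h hb; split_Rabs; lra).
  assert (1 / s * Rb <= rs / 2).
  { pose proof (Rmin_l rs h0). apply Rle_trans with (dl0 * Rb); [apply Rmult_le_compat_r|]; lra. }
  assert (0 < 1 / s) by (apply Rdiv_lt_0_compat; lra).
  replace (snd (Y i) / s) with (1 / s * snd (Y i)) by (field; lra). nra.
Qed.

Lemma vortex_solutions_exist (zs eps : R) : 0 < lnabs eps -> 1 / sqrt (lnabs eps) <= dl0 ->
  (exists X, is_sol N T (ok_X N) (F_X N gamma eps) (X0eps zs rs eps Y0) X) /\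
  (exists Yt, is_sol N T (no_collision N) (F_Y N gamma rs) Y0 Yt).
Proof.
  intros hL hdl. assert (hs : 0 < sqrt (lnabs eps)) by (apply sqrt_lt_R0; auto).
  assert (0 < 1 / sqrt (lnabs eps)) by (apply Rdiv_lt_0_compat; lra).
  split.
  - destruct (rescaled_sol_exists (1 / sqrt (lnabs eps))) as [Y [HY HK]]; [lra|].
    eexists. apply unscale_is_sol; eauto.
    + intros t _. apply no_collision_in_box; auto.
    + intros t _ i hi. apply (unscaled_radius_pos _ (fun j => Y j t) i); auto.
  - destruct (rescaled_sol_exists 0) as [Y [HY HK]]; [lra|].
    exists Y. rewrite F_Y_eq_rescaled_field by exact rs_pos.
    apply (is_sol_weaken_ok _ _ _ _ _ _ _ HY). intros t _. apply no_collision_in_box; auto.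
Qed.

Lemma vortex_estimates (zs eps : R) (X Yt : nat -> R -> R * R) :
  0 < lnabs eps -> 1 / sqrt (lnabs eps) <= dl0 ->
  is_sol N T (ok_X N) (F_X N gamma eps) (X0eps zs rs eps Y0) X ->
  is_sol N T (no_collision N) (F_Y N gamma rs) Y0 Yt ->
  forall t i, 0 <= t <= T -> (i < N)%nat ->
    inA zs eps (snd (X0eps zs rs eps Y0 i)) rho h0 (X i t) /\
    inA zs eps (snd (X0eps zs rs eps Y0 i)) rho h0 (Xtilde zs rs gamma eps Yt i t) /\
    dist2 (X i t) (Xtilde zs rs gamma eps Yt i t) <= 6 * field_delta gamma rs Rb * T / lnabs eps.
Proof.
  intros hL hdl HX HYt t i ht hi.
  set (s := sqrt (lnabs eps)) in *. set (v := gamma / (4 * PI * rs)) in *.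
  assert (hs : 0 < s) by (apply sqrt_lt_R0; auto).
  assert (hdl' : 0 < 1 / s <= dl0) by (split; [apply Rdiv_lt_0_compat|]; lra).
  pose proof (rescale_is_sol N T gamma eps zs rs Y0 X rs_pos hL HX) as HY. fold s v in HY.
  rewrite F_Y_eq_rescaled_field in HYt by exact rs_pos.
  destruct (rescaled_sol_in_box (1 / s) _ _ ltac:(lra) HY t ht i hi) as [y1 y2].
  destruct (rescaled_sol_in_box 0 _ _ ltac:(lra) HYt t ht i hi) as [z1 z2].
  destruct (rescaled_sols_close _ _ _ _ _ hdl' HY HYt t ht i hi) as [c1 c2].
  cbv beta in y1, y2, c1, c2.
  destruct (config_bound i hi) as [hb _].
  assert (hvt : 0 <= v * t <= h0 / 2).
  { assert (0 < v) by (unfold v; pose proof PI_RGT_0; apply Rdiv_lt_0_compat; nra).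
    split; [apply Rmult_le_pos; lra|]. apply Rle_trans with (v * T); [apply Rmult_le_compat_l|]; lra. }
  assert (hRb : Rb / s <= h0 / 2).
  { pose proof (Rmin_r rs h0). replace (Rb / s) with (1 / s * Rb) by (field; lra).
    apply Rle_trans with (dl0 * Rb); [apply Rmult_le_compat_r|]; lra. }
  rewrite <- (unscale_rescale zs rs v s t (X i t)) by exact hs.
  change (Xtilde zs rs gamma eps Yt i t) with (unscale zs rs v s t (Yt i t)).
  split; [|split]; try (apply (unscale_in_A zs rs v eps t rho h0 Rb); fold s; auto; lra).
  eapply Rle_trans; [apply (dist2_unscale_le _ _ _ _ _ _ _ _ hs c1 c2)|].
  right. replace (lnabs eps) with (s * s) by (unfold s; rewrite sqrt_sqrt; lra). field. lra.
Qed.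

End UniformEstimates.

Theorem lemma5p3 (N : nat) (zs rs : R) (Y0 : nat -> R * R) (gamma h0 : R) :
  (2 <= N)%nat -> 0 < rs ->
  (forall j k, (j < N)%nat -> (k < N)%nat -> j <> k -> snd (Y0 j) <> snd (Y0 k)) ->
  0 < gamma -> 0 < h0 ->
  exists TX eps0 C, 0 < TX /\ 0 < eps0 /\ 0 < C /\
    forall eps, 0 < eps <= eps0 -> eps < 1 ->
      (* the solutions exist on [0, TX] *)
      (exists X, is_sol N TX (ok_X N) (F_X N gamma eps) (X0eps zs rs eps Y0) X) /\
      (exists Yt, is_sol N TX (no_collision N) (F_Y N gamma rs) Y0 Yt) /\
      (* and (every such solution, i.e. the solution) satisfies the estimates *)
      (forall X Yt,
         is_sol N TX (ok_X N) (F_X N gamma eps) (X0eps zs rs eps Y0) X ->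
         is_sol N TX (no_collision N) (F_Y N gamma rs) Y0 Yt ->
         forall t i, 0 <= t <= TX -> (i < N)%nat ->
           inA zs eps (snd (X0eps zs rs eps Y0 i)) (d0 N Y0) h0 (X i t) /\
           inA zs eps (snd (X0eps zs rs eps Y0 i)) (d0 N Y0) h0
               (Xtilde zs rs gamma eps Yt i t) /\
           dist2 (X i t) (Xtilde zs rs gamma eps Yt i t) <= C / lnabs eps).
Proof.
  intros hN hrs hdist hg hh.
  destruct (d0_spec N Y0 hN hdist) as [hd0 hgap].
  destruct (exists_config_bound N Y0 (d0 N Y0) hd0) as [Rb [hRb HRb]].
  destruct (field_constants_pos N gamma rs (2 * d0 N Y0) Rb) as [hM [hL hD]]; try lra.
  destruct (exists_small_time (field_bound N gamma rs (2 * d0 N Y0) Rb)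
              (field_lipschitz N gamma rs (2 * d0 N Y0)) (gamma / (4 * PI * rs)) (d0 N Y0) (h0 / 2))
    as [T (hT & hMT & hLT & hvT)]; try lra.
  { pose proof PI_RGT_0. apply Rlt_le, Rdiv_lt_0_compat; nra. }
  set (dl0 := Rmin rs h0 / (2 * Rb)).
  assert (hdl0 : 0 < dl0) by (apply Rdiv_lt_0_compat; [apply Rmin_pos|]; lra).
  exists T, (exp (- (1 / (dl0 * dl0)))), (6 * field_delta gamma rs Rb * T).
  split; [|split; [apply exp_pos|split; [nra|]]]; auto.
  intros eps heps heps1.
  destruct (lnabs_large dl0 eps hdl0 heps heps1) as [hlog hdl].
  assert (hdl0Rb : dl0 * Rb <= Rmin rs h0 / 2) by (right; unfold dl0; field; lra).
  destruct (vortex_solutions_exist N Y0 gamma rs h0 (d0 N Y0) Rb T dl0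
              hg hrs hd0 hRb hT hgap HRb hMT hLT hdl0Rb zs eps hlog hdl) as [HX HYt].
  split; [|split]; auto.
  intros X Yt. exact (vortex_estimates N Y0 gamma rs h0 (d0 N Y0) Rb T dl0
                        hg hrs hd0 hRb hT hgap HRb hMT hLT hvT hdl0Rb zs eps X Yt hlog hdl).
Qed.
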